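(* Let $c$ be an oriented geodesic of $\mathbb{H}^2$ whose tail and head both lie in the limit set $\Lambda_{\Gamma_o}$. Let $(\ell_m)_{m\in\mathbb{Z}}$ be the leaves of $\mathcal{L}$ crossed by $c$, indexed in the order in which $c$ crosses them and each oriented so that $c$ crosses it from its right side to its left side, and suppose the indexing is chosen so that $\ell_0=\gamma_0e_0$ for some $\gamma_0\in\Gamma_o$. Then for every integer $n$, the oriented leaf $\ell_{2n}$ lies in the $\Gamma_o$-orbit of $e_0$; moreover, if $\gamma_n$ denotes the unique element of $\Gamma_o$ with $\ell_{2n}=\gamma_ne_0$, then $\gamma_{n+1}=\gamma_nw$ for some $w$ in $$W=\{R_*IR_*I,\ R_*IR_*^2I,\ R_*^2IR_*^2I,\ R_*^2IR_*I\}.$$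
   Context: Work in the upper half-plane model of $\mathbb{H}^2$. Let $\Delta_0$ be the ideal triangle with vertices $0,1,\infty$, $e_0$ the geodesic oriented from $\infty$ to $0$, and $I$ the order-2 rotation $z\mapsto-1/z$ (whose center lies on $e_0$). Let $\Delta$ be a hyperideal triangle (a region bounded by three pairwise disjoint geodesics with no common ideal endpoints) containing $\Delta_0$, having $e_0$ as a side, and invariant under an order-3 rotation $R_*$ that permutes its sides clockwise, chosen so that the orthogonal projection of the center of $R_*$ onto $e_0$ is the fixed point of $I$. Let $\Gamma=\langle I,R_*\rangle$ (a convex cocompact group isomorphic to $\mathrm{PSL}(2,\mathbb{Z})$), $\Gamma_o=\langle R_*,IR_*I\rangle$ its index-2 subgroup, and $\mathcal{L}$ the lamination formed by the $\Gamma$-images of the sides of $\Delta$; its leaves are geodesics, and $\Gamma_o$ acts simply transitively on unoriented leaves. Oriented leaves: the sides $R_*e_0$, $R_*^2e_0$ carry the orientations of the images of $e_0$. For an oriented geodesic, its left side is the half-plane on its left. *)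

From Stdlib Require Import Reals Lra ZArith List.
Open Scope R_scope.

(* A point x + i y of the upper half-plane (points used with y > 0). *)
Record pt := mkPt { px : R; py : R }.

Definition pI : pt := mkPt 0 1.

Inductive bpt := Fin (x : R) | Inf.

(** * Möbius transformations, as real 2x2 matrices [[a,b],[c,d]] : z |-> (az+b)/(cz+d).
    Elements of PSL(2,R) are matrices of determinant 1 up to sign ([peq]). *)
Record mob := mkMob { ma : R; mb : R; mc : R; md : R }.

Definition mdet (g : mob) : R := ma g * md g - mb g * mc g.

Definition mmul (g h : mob) : mob :=
  mkMob (ma g * ma h + mb g * mc h) (ma g * mb h + mb g * md h)
        (mc g * ma h + md g * mc h) (mc g * mb h + md g * md h).

Definition madj (g : mob) : mob := mkMob (md g) (- mb g) (- mc g) (ma g).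
Definition mneg (g : mob) : mob := mkMob (- ma g) (- mb g) (- mc g) (- md g).
Definition mid : mob := mkMob 1 0 0 1.

Definition peq (g h : mob) : Prop := g = h \/ g = mneg h.

Definition act_pt (g : mob) (z : pt) : pt :=
  let den := (mc g * px z + md g) ^ 2 + (mc g * py z) ^ 2 in
  mkPt (((ma g * px z + mb g) * (mc g * px z + md g) + ma g * mc g * py z ^ 2) / den)
       (mdet g * py z / den).

Definition act_bpt (g : mob) (u : bpt) : bpt :=
  match u with
  | Fin x => if Req_EM_T (mc g * x + md g) 0 then Inf
             else Fin ((ma g * x + mb g) / (mc g * x + md g))
  | Inf => if Req_EM_T (mc g) 0 then Inf else Fin (ma g / mc g)
  end.

Record geod := mkGeod { gtail : bpt; ghead : bpt }.

Definition act_geod (g : mob) (l : geod) : geod :=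
  mkGeod (act_bpt g (gtail l)) (act_bpt g (ghead l)).

Definition grev (l : geod) : geod := mkGeod (ghead l) (gtail l).

Definition same_unor (l l' : geod) : Prop := l = l' \/ l = grev l'.

(* Side function: positive on the left side of the oriented geodesic l,
   zero on l, negative on its right side. *)
Definition sidef (l : geod) (z : pt) : R :=
  match gtail l, ghead l with
  | Fin u, Fin v => (v - u) * ((px z - u) * (px z - v) + py z ^ 2)
  | Fin u, Inf => u - px z
  | Inf, Fin v => px z - v
  | Inf, Inf => 0
  end.

Definition on_geod (l : geod) (z : pt) : Prop := sidef l z = 0.
Definition left_of (l : geod) (z : pt) : Prop := 0 < sidef l z.
Definition right_of (l : geod) (z : pt) : Prop := sidef l z < 0.

(* Hyperbolic cosh of the distance between two points of H^2. *)
Definition hcosh (z w : pt) : R :=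
  1 + ((px z - px w) ^ 2 + (py z - py w) ^ 2) / (2 * py z * py w).

(** * Groups generated by finitely many elements (lists contain inverses) *)
Inductive gen (S : list mob) : mob -> Prop :=
  | gen_id : gen S mid
  | gen_mul : forall g s, gen S g -> In s S -> gen S (mmul g s).

(* Membership of a PSL(2,R) element (represented by any lift) in <S>. *)
Definition in_grp (S : list mob) (g : mob) : Prop :=
  exists h, gen S h /\ peq g h.

Definition Iinv : mob := mkMob 0 (-1) 1 0.

Definition e0 : geod := mkGeod Inf (Fin 0).

Definition Gamma_gens (Rs : mob) : list mob := Iinv :: madj Iinv :: Rs :: madj Rs :: nil.

Definition GammaO_gens (Rs : mob) : list mob :=
  Rs :: madj Rs :: mmul (mmul Iinv Rs) Iinv :: mmul (mmul Iinv (madj Rs)) Iinv :: nil.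

Definition sides (Rs : mob) : list geod :=
  e0 :: act_geod Rs e0 :: act_geod (mmul Rs Rs) e0 :: nil.

(* Rs is the rotation of angle theta (counterclockwise if theta > 0) about p:
   det Rs = 1, Rs p = p and the derivative (cp+d)^(-2) of Rs at p equals e^{i theta},
   i.e. (cp+d)^2 * e^{i theta} = 1. *)
Definition is_rotation (Rs : mob) (p : pt) (theta : R) : Prop :=
  mdet Rs = 1 /\ 0 < py p /\ act_pt Rs p = p /\
  let u := mc Rs * px p + md Rs in
  let v := mc Rs * py p in
  let A := u ^ 2 - v ^ 2 in
  let B := 2 * u * v in
  A * cos theta - B * sin theta = 1 /\ A * sin theta + B * cos theta = 0.

Definition closures_disjoint (l l' : geod) : Prop :=
  gtail l <> gtail l' /\ gtail l <> ghead l' /\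
  ghead l <> gtail l' /\ ghead l <> ghead l' /\
  ~ (exists z, 0 < py z /\ on_geod l z /\ on_geod l' z).

(* hDelta: the region bounded by the three sides, containing the center p. *)
Definition hDelta (Rs : mob) (p : pt) (z : pt) : Prop :=
  0 < py z /\ forall s, In s (sides Rs) -> 0 < sidef s z * sidef s p.

(* Delta_0 : the ideal triangle with vertices 0, 1, ∞. *)
Definition hDelta0 (z : pt) : Prop :=
  0 < py z /\ 0 < px z < 1 /\ 0 < px z * (px z - 1) + py z ^ 2.

Definition is_leaf (Rs : mob) (l : geod) : Prop :=
  exists g s, in_grp (Gamma_gens Rs) g /\ In s (sides Rs) /\ same_unor l (act_geod g s).

(* Convergence of a sequence of points of H^2 to an ideal point (Euclidean topology
   on the closed half-plane, with ∞ the point at infinity). *)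
Definition conv_to (z : nat -> pt) (xi : bpt) : Prop :=
  match xi with
  | Fin x => forall eps, 0 < eps -> exists N, forall k, (N <= k)%nat ->
               (px (z k) - x) ^ 2 + py (z k) ^ 2 < eps
  | Inf => forall K, exists N, forall k, (N <= k)%nat -> K < px (z k) ^ 2 + py (z k) ^ 2
  end.

Definition in_limit_set (S : list mob) (xi : bpt) : Prop :=
  exists g : nat -> mob, (forall k, in_grp S (g k)) /\ conv_to (fun k => act_pt (g k) pI) xi.

(* M parametrizes the oriented geodesic c: M is orientation preserving and sends
   the geodesic 0 -> ∞ onto c; c(s) := M (i e^s), s increasing from tail to head. *)
Definition param_of (c : geod) (M : mob) : Prop :=
  0 < mdet M /\ act_bpt M (Fin 0) = gtail c /\ act_bpt M Inf = ghead c.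

Definition cpt (M : mob) (s : R) : pt := act_pt M (mkPt 0 (exp s)).

Definition crosses_RL (M : mob) (l : geod) (s0 : R) : Prop :=
  on_geod l (cpt M s0) /\
  (forall s, s < s0 -> right_of l (cpt M s)) /\
  (forall s, s0 < s -> left_of l (cpt M s)).

Definition crossed (M : mob) (l : geod) : Prop :=
  (exists s, on_geod l (cpt M s)) /\ (exists s, ~ on_geod l (cpt M s)).

Definition Wset (Rs : mob) : list mob :=
  let R2 := mmul Rs Rs in
  mmul (mmul (mmul Rs Iinv) Rs) Iinv ::
  mmul (mmul (mmul Rs Iinv) R2) Iinv ::
  mmul (mmul (mmul R2 Iinv) R2) Iinv ::
  mmul (mmul (mmul R2 Iinv) Rs) Iinv :: nil.

(* The group Γ = <I, R_*> is the free product Z/2 * Z/3: up to sign each element is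
   R^a or R^a I R^b1 ... I R^bn I R^c with all bi in {1, 2}.  A ping-pong between the two
   half-planes bounded by e0 (I swaps them, R and R^2 push the right one into the left
   one, since the other sides R e0, R^2 e0 of Δ are half-circles over intervals of
   (0, +oo)) shows that the leaves γ e0 avoid the interior of Δ, that two leaves which
   meet coincide, and that the stabilizer in Γ of the oriented geodesic e0 is trivial.
   Moving the current leaf ℓ_m = γ e0 to e0 by γ^-1, the geodesic c enters Δ, so the next
   leaf it crosses is a side R^j e0 of Δ crossed from inside: ℓ_(m+1) = γ R^j I e0 with j
   in {1, 2}.  Two steps multiply γ by R^j I R^j' I, an element of W ⊂ Γ_o, and the
   uniqueness of γ_n is the triviality of the stabilizer.  The hypotheses on R_* enter
   only through the normal form R_* = ±[[1/2 + kx, -k], [k, 1/2 - kx]], k = √3/(2y), of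
   the rotation by -2π/3 about p = x + iy, where |p| = 1, x > 0 and y < √3 x. *)

From Stdlib Require Import Reals ZArith List.
From Stdlib Require Import Lra Lia Classical.
Open Scope R_scope.
Import ListNotations.

Lemma mob_eq a b c d a' b' c' d' :
  a = a' -> b = b' -> c = c' -> d = d' -> mkMob a b c d = mkMob a' b' c' d'.
Proof. intros; subst; reflexivity. Qed.

Lemma pt_eq x y x' y' : x = x' -> y = y' -> mkPt x y = mkPt x' y'.
Proof. intros; subst; reflexivity. Qed.

Ltac mob_ring :=
  repeat match goal with g : mob |- _ => destruct g end;
  unfold mmul, madj, mneg, mid, mdet; simpl; apply mob_eq; ring.

Lemma mmul_assoc g h k : mmul (mmul g h) k = mmul g (mmul h k).
Proof. mob_ring. Qed.
Lemma mmul_mid_l g : mmul mid g = g.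
Proof. mob_ring. Qed.
Lemma mmul_mid_r g : mmul g mid = g.
Proof. mob_ring. Qed.
Lemma mmul_mneg_l g h : mmul (mneg g) h = mneg (mmul g h).
Proof. mob_ring. Qed.
Lemma mmul_mneg_r g h : mmul g (mneg h) = mneg (mmul g h).
Proof. mob_ring. Qed.
Lemma mneg_mneg g : mneg (mneg g) = g.
Proof. mob_ring. Qed.
Lemma mmul_madj_r g : mmul g (madj g) = mkMob (mdet g) 0 0 (mdet g).
Proof. mob_ring. Qed.
Lemma mmul_madj_l g : mmul (madj g) g = mkMob (mdet g) 0 0 (mdet g).
Proof. mob_ring. Qed.
Lemma madj_mmul g h : madj (mmul g h) = mmul (madj h) (madj g).
Proof. mob_ring. Qed.
Lemma madj_madj g : madj (madj g) = g.
Proof. mob_ring. Qed.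
Lemma madj_mneg g : madj (mneg g) = mneg (madj g).
Proof. mob_ring. Qed.
Lemma madj_mid : madj mid = mid.
Proof. mob_ring. Qed.

Lemma mdet_mmul g h : mdet (mmul g h) = mdet g * mdet h.
Proof. destruct g, h; unfold mdet, mmul; simpl; ring. Qed.
Lemma mdet_mneg g : mdet (mneg g) = mdet g.
Proof. destruct g; unfold mdet, mneg; simpl; ring. Qed.
Lemma mdet_madj g : mdet (madj g) = mdet g.
Proof. destruct g; unfold mdet, madj; simpl; ring. Qed.
Lemma mdet_mid : mdet mid = 1.
Proof. unfold mdet, mid; simpl; ring. Qed.

Lemma mdet1_madj_l g : mdet g = 1 -> mmul (madj g) g = mid.
Proof. intros H; rewrite mmul_madj_l, H; reflexivity. Qed.
Lemma mdet1_madj_r g : mdet g = 1 -> mmul g (madj g) = mid.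
Proof. intros H; rewrite mmul_madj_r, H; reflexivity. Qed.

(* Cayley-Hamilton: [g^2 = tr(g) g - det(g)], multiplied by [g]. *)
Lemma mcube_trace g :
  let t := ma g + md g in
  mmul g (mmul g g) =
  mkMob ((t ^ 2 - mdet g) * ma g - t * mdet g) ((t ^ 2 - mdet g) * mb g)
        ((t ^ 2 - mdet g) * mc g) ((t ^ 2 - mdet g) * md g - t * mdet g).
Proof. mob_ring. Qed.

Lemma Iinv_mdet : mdet Iinv = 1.
Proof. unfold mdet, Iinv; simpl; ring. Qed.
Lemma Iinv_sq : mmul Iinv Iinv = mneg mid.
Proof. mob_ring. Qed.
Lemma madj_Iinv : madj Iinv = mneg Iinv.
Proof. mob_ring. Qed.

Lemma peq_refl g : peq g g.
Proof. left; reflexivity. Qed.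
Lemma peq_sym g h : peq g h -> peq h g.
Proof. intros [->| ->]; [left|right]; rewrite ?mneg_mneg; reflexivity. Qed.
Lemma peq_trans g h k : peq g h -> peq h k -> peq g k.
Proof. intros [->| ->] [->| ->]; unfold peq; rewrite ?mneg_mneg; auto. Qed.
Lemma peq_mneg g : peq (mneg g) g.
Proof. right; reflexivity. Qed.
Lemma peq_mmul g g' h h' : peq g g' -> peq h h' -> peq (mmul g h) (mmul g' h').
Proof.
  intros [->| ->] [->| ->]; unfold peq; rewrite ?mmul_mneg_l, ?mmul_mneg_r, ?mneg_mneg; auto.
Qed.
Lemma peq_mmul_l g h h' : peq h h' -> peq (mmul g h) (mmul g h').
Proof. apply peq_mmul, peq_refl. Qed.
Lemma peq_mdet g h : peq g h -> mdet g = mdet h.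
Proof. intros [->| ->]; rewrite ?mdet_mneg; reflexivity. Qed.
Lemma peq_madj g h : peq g h -> peq (madj g) (madj h).
Proof. intros [->| ->]; [left|right]; rewrite ?madj_mneg; reflexivity. Qed.

(** * Actions on the boundary and on the half-plane *)

(* The boundary action is linear in homogeneous coordinates [(x, 1)] and [(1, 0)]. *)
Definition bpt_of (p q : R) : bpt := if Req_EM_T q 0 then Inf else Fin (p / q).
Definition coords (e : bpt) : R * R := match e with Fin x => (x, 1) | Inf => (1, 0) end.
Definition lin_act (g : mob) (P : R * R) : R * R :=
  (ma g * fst P + mb g * snd P, mc g * fst P + md g * snd P).

Lemma bpt_of_ext p q p' q' : p = p' -> q = q' -> bpt_of p q = bpt_of p' q'.
Proof. intros; subst; reflexivity. Qed.

Lemma act_bpt_lin g e :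
  act_bpt g e = bpt_of (fst (lin_act g (coords e))) (snd (lin_act g (coords e))).
Proof.
  destruct e as [x|].
  - change (act_bpt g (Fin x)) with (bpt_of (ma g * x + mb g) (mc g * x + md g)).
    apply bpt_of_ext; simpl; ring.
  - change (act_bpt g Inf) with (bpt_of (ma g) (mc g)). apply bpt_of_ext; simpl; ring.
Qed.

Lemma bpt_of_scale l p q : l <> 0 -> bpt_of (l * p) (l * q) = bpt_of p q.
Proof.
  intros Hl; unfold bpt_of.
  destruct (Req_EM_T (l * q) 0) as [H|H], (Req_EM_T q 0) as [H'|H']; auto.
  - destruct (Rmult_integral _ _ H); contradiction.
  - subst; rewrite Rmult_0_r in H; contradiction.
  - f_equal; field; auto.
Qed.

Lemma coords_bpt_of p q : ~ (p = 0 /\ q = 0) ->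
  exists l, l <> 0 /\ coords (bpt_of p q) = (l * p, l * q).
Proof.
  intros Hpq; unfold bpt_of.
  destruct (Req_EM_T q 0) as [->|H]; simpl.
  - assert (p <> 0) by tauto.
    exists (/ p); split; [apply Rinv_neq_0_compat; auto|f_equal; field; auto].
  - exists (/ q); split; [apply Rinv_neq_0_compat; auto|f_equal; field; auto].
Qed.

Lemma bpt_of_coords e : bpt_of (fst (coords e)) (snd (coords e)) = e.
Proof.
  destruct e; unfold bpt_of; simpl.
  - destruct (Req_EM_T 1 0); [lra|f_equal; field].
  - destruct (Req_EM_T 0 0); [reflexivity|lra].
Qed.

Lemma coords_nonzero e : ~ (fst (coords e) = 0 /\ snd (coords e) = 0).
Proof. destruct e; simpl; lra. Qed.

Lemma lin_act_nonzero g P : mdet g <> 0 -> ~ (fst P = 0 /\ snd P = 0) ->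
  ~ (fst (lin_act g P) = 0 /\ snd (lin_act g P) = 0).
Proof.
  destruct g as [a b c d], P as [p q]; unfold lin_act, mdet; simpl.
  intros Hd HP [H1 H2]; apply HP.
  assert (Ep : p * (a * d - b * c) = d * (a * p + b * q) - b * (c * p + d * q)) by ring.
  assert (Eq : q * (a * d - b * c) = a * (c * p + d * q) - c * (a * p + b * q)) by ring.
  rewrite H1, H2 in Ep, Eq.
  split; [destruct (Rmult_integral p (a * d - b * c))|destruct (Rmult_integral q (a * d - b * c))];
    auto; try lra; contradiction.
Qed.

Lemma act_bpt_mmul g h e : mdet g <> 0 -> mdet h <> 0 ->
  act_bpt (mmul g h) e = act_bpt g (act_bpt h e).
Proof.
  intros Hg Hh.
  rewrite (act_bpt_lin g (act_bpt h e)), (act_bpt_lin h e), act_bpt_lin.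
  destruct (coords_bpt_of (fst (lin_act h (coords e))) (snd (lin_act h (coords e))))
    as [l [Hl ->]].
  { apply lin_act_nonzero, coords_nonzero; auto. }
  destruct (coords e) as [p q], g, h; unfold lin_act; simpl.
  rewrite <- (bpt_of_scale l) by auto. apply bpt_of_ext; ring.
Qed.

Lemma act_bpt_scalar D e : D <> 0 -> act_bpt (mkMob D 0 0 D) e = e.
Proof.
  intros HD. rewrite act_bpt_lin. transitivity (bpt_of (fst (coords e)) (snd (coords e)));
    [|apply bpt_of_coords].
  destruct (coords e) as [p q]; unfold lin_act; simpl.
  rewrite <- (bpt_of_scale D p q HD). apply bpt_of_ext; ring.
Qed.

Lemma act_bpt_mneg g e : act_bpt (mneg g) e = act_bpt g e.
Proof.
  rewrite !act_bpt_lin. destruct (coords e) as [p q], g; unfold lin_act; simpl.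
  rewrite <- (bpt_of_scale (-1)) by lra. apply bpt_of_ext; ring.
Qed.

Lemma act_geod_mmul g h l : mdet g <> 0 -> mdet h <> 0 ->
  act_geod (mmul g h) l = act_geod g (act_geod h l).
Proof. intros; unfold act_geod; simpl; rewrite !act_bpt_mmul; auto. Qed.

Lemma act_geod_scalar D l : D <> 0 -> act_geod (mkMob D 0 0 D) l = l.
Proof. intros; destruct l; unfold act_geod; simpl; rewrite !act_bpt_scalar; auto. Qed.

Lemma act_geod_mid l : act_geod mid l = l.
Proof. apply act_geod_scalar; lra. Qed.

Lemma act_geod_peq g h l : peq g h -> act_geod g l = act_geod h l.
Proof. intros [->| ->]; unfold act_geod; rewrite ?act_bpt_mneg; reflexivity. Qed.

Lemma grev_grev l : grev (grev l) = l.
Proof. destruct l; reflexivity. Qed.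

Lemma act_geod_grev g l : act_geod g (grev l) = grev (act_geod g l).
Proof. destruct l; reflexivity. Qed.

Lemma act_geod_madj_r g l : mdet g <> 0 -> act_geod g (act_geod (madj g) l) = l.
Proof.
  intros Hg. rewrite <- act_geod_mmul by (rewrite ?mdet_madj; auto).
  rewrite mmul_madj_r. apply act_geod_scalar; auto.
Qed.

Lemma act_geod_madj_l g l : mdet g <> 0 -> act_geod (madj g) (act_geod g l) = l.
Proof.
  intros Hg. rewrite <- act_geod_mmul by (rewrite ?mdet_madj; auto).
  rewrite mmul_madj_l. apply act_geod_scalar; auto.
Qed.

Definition act_den (g : mob) (z : pt) : R := (mc g * px z + md g) ^ 2 + (mc g * py z) ^ 2.

Lemma sq_pos r : r <> 0 -> 0 < r * r.
Proof. intros H; destruct (Rtotal_order r 0) as [|[|]]; [nra|contradiction|nra]. Qed.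

Lemma sumsq_eq0 a b : a ^ 2 + b ^ 2 = 0 -> a = 0 /\ b = 0.
Proof. intros H; split; nra. Qed.

Lemma act_den_pos g z : mdet g <> 0 -> 0 < py z -> 0 < act_den g z.
Proof.
  destruct g as [a b c d], z as [x y]; unfold act_den, mdet; simpl; intros Hd Hy.
  destruct (Req_dec c 0) as [->|Hc].
  - assert (d <> 0) by (intros ->; apply Hd; ring).
    assert (0 < d * d) by (apply sq_pos; auto).
    assert (0 <= (0 * x + d) ^ 2) by apply pow2_ge_0. nra.
  - assert (0 < (c * y) * (c * y)) by (apply sq_pos, Rmult_integral_contrapositive; lra).
    assert (0 <= (c * x + d) ^ 2) by apply pow2_ge_0. nra.
Qed.

Lemma act_pt_py_pos g z : 0 < mdet g -> 0 < py z -> 0 < py (act_pt g z).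
Proof.
  intros Hd Hy. change (0 < mdet g * py z / act_den g z).
  assert (0 < act_den g z) by (apply act_den_pos; lra).
  apply Rdiv_lt_0_compat; nra.
Qed.

Lemma act_pt_mmul g h z : mdet g <> 0 -> mdet h <> 0 -> 0 < py z ->
  act_pt (mmul g h) z = act_pt g (act_pt h z).
Proof.
  intros Hg Hh Hz.
  assert (D1 : 0 < act_den h z) by (apply act_den_pos; auto).
  assert (Hhz : py (act_pt h z) <> 0).
  { change (mdet h * py z / act_den h z <> 0).
    apply Rmult_integral_contrapositive; split;
      [apply Rmult_integral_contrapositive; split; lra|apply Rinv_neq_0_compat; lra]. }
  assert (D2 : act_den g (act_pt h z) <> 0).
  { intros E; destruct (sumsq_eq0 _ _ E) as [E1 E2].
    destruct (Rmult_integral _ _ E2) as [Hc|]; [|contradiction].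
    rewrite Hc, Rmult_0_l, Rplus_0_l in E1.
    apply Hg; destruct g; unfold mdet; simpl in *; rewrite Hc, E1; ring. }
  assert (D3 : 0 < act_den (mmul g h) z)
    by (apply act_den_pos; auto; rewrite mdet_mmul; apply Rmult_integral_contrapositive; auto).
  revert D1 D2 D3 Hhz. destruct g as [a b c d], h as [a' b' c' d'], z as [x y].
  unfold act_den, act_pt, mmul, mdet; simpl. intros D1 D2 D3 Hhz.
  apply pt_eq; field; repeat split; auto; try lra.
  all: match goal with D1 : 0 < ?K, D2 : ?Y <> 0 |- ?X <> 0 =>
     replace X with (Y * (K * K)) by (field; lra);
     apply Rmult_integral_contrapositive; split; [exact D2|nra] end.
Qed.

Lemma act_pt_scalar D z : D <> 0 -> act_pt (mkMob D 0 0 D) z = z.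
Proof. destruct z; intros HD; unfold act_pt, mdet; simpl; apply pt_eq; field; auto. Qed.

Lemma act_pt_mid z : act_pt mid z = z.
Proof. apply act_pt_scalar; lra. Qed.

Lemma act_pt_mneg g z : act_pt (mneg g) z = act_pt g z.
Proof.
  destruct g, z; unfold act_pt, mneg, mdet; simpl.
  apply pt_eq; unfold Rdiv; f_equal; try ring; f_equal; ring.
Qed.

Lemma act_pt_peq g h z : peq g h -> act_pt g z = act_pt h z.
Proof. intros [->| ->]; auto using act_pt_mneg. Qed.

Lemma act_pt_madj_r g z : 0 < mdet g -> 0 < py z -> act_pt g (act_pt (madj g) z) = z.
Proof.
  intros Hg Hz. rewrite <- act_pt_mmul by (rewrite ?mdet_madj; auto; lra).
  rewrite mmul_madj_r. apply act_pt_scalar; lra.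
Qed.

Lemma act_pt_surj h z : mdet h = 1 -> 0 < py z -> exists v, 0 < py v /\ z = act_pt h v.
Proof.
  intros Hh Hz. exists (act_pt (madj h) z). split.
  - apply act_pt_py_pos; auto. rewrite mdet_madj; lra.
  - rewrite act_pt_madj_r; auto; lra.
Qed.

Definition side_lin (P1 P2 : R * R) (z : pt) : R :=
  (fst P2 * snd P1 - fst P1 * snd P2) *
  ((px z * snd P1 - fst P1) * (px z * snd P2 - fst P2) + py z ^ 2 * snd P1 * snd P2).

Lemma sidef_lin l z : sidef l z = side_lin (coords (gtail l)) (coords (ghead l)) z.
Proof. destruct l as [[u|] [v|]]; unfold sidef, side_lin; simpl; ring. Qed.

Lemma side_lin_scale l1 l2 p1 q1 p2 q2 z :
  side_lin (l1 * p1, l1 * q1) (l2 * p2, l2 * q2) z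
  = (l1 * l1) * (l2 * l2) * side_lin (p1, q1) (p2, q2) z.
Proof. unfold side_lin; simpl; ring. Qed.

Lemma side_lin_act g P1 P2 z : mdet g <> 0 -> 0 < py z ->
  side_lin (lin_act g P1) (lin_act g P2) (act_pt g z)
  = mdet g ^ 3 / act_den g z * side_lin P1 P2 z.
Proof.
  intros Hg Hz. assert (D := act_den_pos g z Hg Hz).
  revert D. destruct g as [a b c d], P1 as [p1 q1], P2 as [p2 q2], z as [x y].
  unfold side_lin, lin_act, act_pt, act_den, mdet; simpl. intros D. field. lra.
Qed.

Lemma sidef_act g l z : 0 < mdet g -> 0 < py z ->
  exists K, 0 < K /\ sidef (act_geod g l) (act_pt g z) = K * sidef l z.
Proof.
  intros Hg Hz. rewrite !sidef_lin. destruct l as [T H]; simpl.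
  rewrite !act_bpt_lin.
  destruct (coords_bpt_of (fst (lin_act g (coords T))) (snd (lin_act g (coords T))))
    as [l1 [Hl1 ->]]; [apply lin_act_nonzero, coords_nonzero; lra|].
  destruct (coords_bpt_of (fst (lin_act g (coords H))) (snd (lin_act g (coords H))))
    as [l2 [Hl2 ->]]; [apply lin_act_nonzero, coords_nonzero; lra|].
  rewrite side_lin_scale, <- !surjective_pairing, side_lin_act by lra.
  exists (l1 * l1 * (l2 * l2) * (mdet g ^ 3 / act_den g z)). split; [|ring].
  assert (0 < l1 * l1) by (apply sq_pos; auto).
  assert (0 < l2 * l2) by (apply sq_pos; auto).
  assert (0 < act_den g z) by (apply act_den_pos; lra).
  assert (0 < mdet g ^ 3) by (apply pow_lt; lra).
  apply Rmult_lt_0_compat; [apply Rmult_lt_0_compat; auto|apply Rdiv_lt_0_compat; auto].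
Qed.

Lemma sidef_grev l z : sidef (grev l) z = - sidef l z.
Proof. rewrite !sidef_lin; destruct l; simpl; unfold side_lin; ring. Qed.

Lemma on_act g l z : 0 < mdet g -> 0 < py z ->
  on_geod (act_geod g l) (act_pt g z) <-> on_geod l z.
Proof.
  intros Hg Hz; destruct (sidef_act g l z Hg Hz) as [K [HK E]].
  unfold on_geod; rewrite E; split; intros H; [|rewrite H; ring].
  destruct (Rmult_integral _ _ H); auto; lra.
Qed.

Lemma left_act g l z : 0 < mdet g -> 0 < py z ->
  left_of (act_geod g l) (act_pt g z) <-> left_of l z.
Proof.
  intros Hg Hz; destruct (sidef_act g l z Hg Hz) as [K [HK E]].
  unfold left_of; rewrite E; split; intros H; [|nra].
  destruct (Rlt_or_le 0 (sidef l z)); auto; nra.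
Qed.

Lemma right_act g l z : 0 < mdet g -> 0 < py z ->
  right_of (act_geod g l) (act_pt g z) <-> right_of l z.
Proof.
  intros Hg Hz; destruct (sidef_act g l z Hg Hz) as [K [HK E]].
  unfold right_of; rewrite E; split; intros H; [|nra].
  destruct (Rlt_or_le (sidef l z) 0); auto; nra.
Qed.

Ltac case_Req :=
  match goal with |- context [Req_EM_T ?a ?b] => destruct (Req_EM_T a b) as [?E|?E] end.

Lemma act_pt_mmul1 g h z : mdet g = 1 -> mdet h = 1 -> 0 < py z ->
  act_pt (mmul g h) z = act_pt g (act_pt h z).
Proof. intros Hg Hh Hz; apply act_pt_mmul; auto; [rewrite Hg|rewrite Hh]; lra. Qed.

Lemma act_pt_py_pos1 g z : mdet g = 1 -> 0 < py z -> 0 < py (act_pt g z).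
Proof. intros Hg Hz; apply act_pt_py_pos; auto; rewrite Hg; lra. Qed.

Lemma sidef_e0 z : sidef e0 z = px z.
Proof. unfold sidef, e0; simpl; ring. Qed.

Lemma Iinv_e0 : act_geod Iinv e0 = grev e0.
Proof.
  unfold act_geod, Iinv, e0, grev, act_bpt; cbn [ma mb mc md gtail ghead].
  case_Req; [lra|]. case_Req; [|exfalso; apply E0; ring].
  f_equal; f_equal; field.
Qed.

Lemma Iinv_sidef_e0 z : 0 < py z ->
  exists K, 0 < K /\ sidef e0 (act_pt Iinv z) = - K * sidef e0 z.
Proof.
  intros Hz. destruct (sidef_act Iinv (grev e0) z) as [K [HK E]]; [rewrite Iinv_mdet; lra|auto|].
  rewrite act_geod_grev, Iinv_e0, grev_grev, !sidef_grev in E.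
  exists K; split; auto. lra.
Qed.

Lemma sidef_halfcircle_axis u v z : 0 < u < v -> px z = 0 -> 0 < py z ->
  0 < sidef (mkGeod (Fin u) (Fin v)) z.
Proof.
  intros Huv Hx Hy. unfold sidef; simpl; rewrite Hx.
  assert (0 < py z * py z) by nra. apply Rmult_lt_0_compat; nra.
Qed.

Lemma sidef_halfcircle_nonpos u v z : 0 < u < v -> 0 < py z ->
  sidef (mkGeod (Fin u) (Fin v)) z <= 0 -> 0 < px z.
Proof.
  intros Huv Hy H. unfold sidef in H; simpl in H.
  assert (0 < py z * py z) by nra.
  assert (H' : (px z - u) * (px z - v) + py z ^ 2 <= 0).
  { destruct (Rle_or_lt ((px z - u) * (px z - v) + py z ^ 2) 0); auto.
    assert (0 < (v - u) * ((px z - u) * (px z - v) + py z ^ 2)) by (apply Rmult_lt_0_compat; lra).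
    lra. }
  destruct (Rle_or_lt (px z) u); nra.
Qed.

(** * Along the geodesic c *)

Lemma cpt_py M s : 0 < mdet M -> 0 < py (cpt M s).
Proof. intros; apply act_pt_py_pos; simpl; auto using exp_pos. Qed.

Lemma cpt_act g M s : mdet g = 1 -> 0 < mdet M ->
  cpt M s = act_pt g (cpt (mmul (madj g) M) s).
Proof.
  intros Hg HM. unfold cpt.
  assert (Hz : 0 < py (mkPt 0 (exp s))) by apply exp_pos.
  rewrite act_pt_mmul, act_pt_madj_r; rewrite ?mdet_madj; auto using act_pt_py_pos; lra.
Qed.

Lemma cpt_mmul_Iinv M s : 0 < mdet M -> cpt (mmul M Iinv) s = cpt M (- s).
Proof.
  intros HM. unfold cpt.
  rewrite act_pt_mmul by (simpl; rewrite ?Iinv_mdet; auto using exp_pos; lra).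
  f_equal. unfold act_pt, Iinv, mdet; simpl.
  assert (H := exp_pos s). rewrite exp_Ropp. apply pt_eq; field; lra.
Qed.

(* Pulled back by [N], the point [cpt N s] is [i e^s], where [side_lin] is affine in
   [e^(2s)]. *)
Lemma sidef_cpt_affine N m : 0 < mdet N -> exists α β, forall s, exists K,
  0 < K /\ sidef m (cpt N s) = K * (α + β * exp (2 * s)).
Proof.
  intros HN.
  set (m' := act_geod (madj N) m).
  assert (Em : m = act_geod N m') by (unfold m'; rewrite act_geod_madj_r; auto; lra).
  destruct (coords (gtail m')) as [p1 q1] eqn:E1, (coords (ghead m')) as [p2 q2] eqn:E2.
  exists ((p2 * q1 - p1 * q2) * (p1 * p2)), ((p2 * q1 - p1 * q2) * (q1 * q2)). intros s.
  unfold cpt; rewrite Em.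
  destruct (sidef_act N m' (mkPt 0 (exp s)) HN) as [K [HK ->]]; [simpl; apply exp_pos|].
  exists K; split; auto. f_equal.
  rewrite sidef_lin, E1, E2; unfold side_lin; simpl.
  replace (2 * s) with (s + s) by ring; rewrite exp_plus; ring.
Qed.

Lemma affine_root_between α β u v : u < v -> 0 < α + β * u -> α + β * v < 0 ->
  exists x, u < x < v /\ α + β * x = 0.
Proof.
  intros Huv Hu Hv.
  assert (Hβ : β < 0).
  { assert (E : β * (v - u) = (α + β * v) - (α + β * u)) by ring.
    destruct (Rlt_or_le β 0); auto.
    assert (0 <= β * (v - u)) by (apply Rmult_le_pos; lra). lra. }
  exists (- α / β). repeat split.
  - apply (Rmult_lt_reg_l (- β)); [lra|].
    replace (- β * (- α / β)) with α by (field; lra). lra.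
  - apply (Rmult_lt_reg_l (- β)); [lra|].
    replace (- β * (- α / β)) with α by (field; lra). lra.
  - field; lra.
Qed.

Lemma affine_two_roots α β u v : u <> v -> α + β * u = 0 -> α + β * v = 0 ->
  α = 0 /\ β = 0.
Proof.
  intros Huv Hu Hv.
  assert (Hβ : β * (u - v) = 0) by lra.
  destruct (Rmult_integral _ _ Hβ); [split; nra|lra].
Qed.

Lemma sidef_cpt_ivt N m a b : 0 < mdet N -> a < b ->
  0 < sidef m (cpt N a) -> sidef m (cpt N b) < 0 ->
  exists s, a < s < b /\ sidef m (cpt N s) = 0.
Proof.
  intros HN Hab Ha Hb.
  destruct (sidef_cpt_affine N m HN) as [α [β HF]].
  destruct (HF a) as [Ka [HKa Ea]], (HF b) as [Kb [HKb Eb]].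
  rewrite Ea in Ha; rewrite Eb in Hb.
  destruct (affine_root_between α β (exp (2 * a)) (exp (2 * b))) as [x [[Hax Hxb] Hx]].
  - apply exp_increasing; lra.
  - nra.
  - nra.
  - assert (Hx0 : 0 < x) by (pose proof (exp_pos (2 * a)); lra).
    assert (Hexp : exp (2 * (ln x / 2)) = x)
      by (replace (2 * (ln x / 2)) with (ln x) by field; apply exp_ln; auto).
    exists (ln x / 2). repeat split.
    + cut (2 * a < 2 * (ln x / 2)); [lra|]. apply exp_lt_inv; rewrite Hexp; auto.
    + cut (2 * (ln x / 2) < 2 * b); [lra|]. apply exp_lt_inv; rewrite Hexp; auto.
    + destruct (HF (ln x / 2)) as [K [_ ->]]. rewrite Hexp, Hx; ring.
Qed.

Lemma sidef_cpt_two_zeros N m s1 s2 : 0 < mdet N -> s1 <> s2 ->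
  sidef m (cpt N s1) = 0 -> sidef m (cpt N s2) = 0 -> forall s, sidef m (cpt N s) = 0.
Proof.
  intros HN Hne H1 H2 s.
  destruct (sidef_cpt_affine N m HN) as [α [β HF]].
  destruct (HF s1) as [K1 [HK1 E1]], (HF s2) as [K2 [HK2 E2]], (HF s) as [K [_ ->]].
  rewrite E1 in H1; rewrite E2 in H2.
  destruct (affine_two_roots α β (exp (2 * s1)) (exp (2 * s2))) as [-> ->].
  - intros X; apply exp_inv in X; lra.
  - destruct (Rmult_integral _ _ H1); auto; lra.
  - destruct (Rmult_integral _ _ H2); auto; lra.
  - ring.
Qed.

(** * The rotation R_* *)

Lemma sqrt3_sq : sqrt 3 * sqrt 3 = 3.
Proof. apply sqrt_sqrt; lra. Qed.

Lemma rotation_angle_coeffs A B :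
  A * cos (- (2 * PI / 3)) - B * sin (- (2 * PI / 3)) = 1 ->
  A * sin (- (2 * PI / 3)) + B * cos (- (2 * PI / 3)) = 0 ->
  A = - (1 / 2) /\ B = sqrt 3 / 2.
Proof.
  replace (2 * PI / 3) with (PI - PI / 3) by field.
  rewrite cos_neg, sin_neg, Rtrigo_facts.cos_pi_minus, sin_PI_x, cos_PI3, sin_PI3.
  intros H1 H2. pose proof sqrt3_sq.
  assert (HB : B = - (sqrt 3 * A)) by lra.
  assert (HA : A = - (1 / 2)) by (rewrite HB in H1; nra).
  split; [auto|rewrite HB, HA; field].
Qed.

Lemma fixed_point_coeffs a b c d x y :
  a * d - b * c = 1 -> 0 < y -> x ^ 2 + y ^ 2 = 1 ->
  act_pt (mkMob a b c d) (mkPt x y) = mkPt x y ->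
  (c * x + d) ^ 2 + (c * y) ^ 2 = 1 /\ a = c * x + d + c * x /\ b = - c.
Proof.
  intros Hdet Hy Hr Hfix.
  assert (Hden : 0 < (c * x + d) ^ 2 + (c * y) ^ 2)
    by (apply (act_den_pos (mkMob a b c d) (mkPt x y)); unfold mdet; simpl; lra).
  assert (Fx := f_equal px Hfix); assert (Fy := f_equal py Hfix).
  unfold act_pt, mdet in Fx, Fy; cbn [px py ma mb mc md] in Fx, Fy. rewrite Hdet in Fy.
  set (D := (c * x + d) ^ 2 + (c * y) ^ 2) in *.
  assert (HD : D = 1).
  { apply (Rmult_eq_reg_l y); [|lra]. rewrite <- Fy at 1. field; lra. }
  rewrite HD in Fx. unfold Rdiv in Fx; rewrite Rinv_1, Rmult_1_r in Fx.
  assert (Ha : a * D = (c * x + d) * (a * d - b * c) + c * ((a * x + b) * (c * x + d) + a * c * y ^ 2))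
    by (unfold D; ring).
  assert (Hb : b * D = - (x * (c * x + d) + c * y ^ 2) * (a * d - b * c)
                       + d * ((a * x + b) * (c * x + d) + a * c * y ^ 2))
    by (unfold D; ring).
  rewrite HD, Hdet, Fx in Ha, Hb.
  repeat split; [auto|lra|].
  replace (- c) with (- c * (x ^ 2 + y ^ 2)) by (rewrite Hr; ring). lra.
Qed.

(* The rotation by [-2π/3] about [x + iy], [x^2 + y^2 = 1]. *)
Definition rot_std (x y : R) : mob :=
  let k := sqrt 3 / (2 * y) in mkMob (1 / 2 + k * x) (- k) k (1 / 2 - k * x).

Lemma rotation_rot_std a b c d x y :
  is_rotation (mkMob a b c d) (mkPt x y) (- (2 * PI / 3)) -> x ^ 2 + y ^ 2 = 1 ->
  peq (mkMob a b c d) (rot_std x y).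
Proof.
  intros [Hdet [Hy [Hfix [T1 T2]]]] Hr; simpl in *. unfold mdet in Hdet; simpl in Hdet.
  destruct (rotation_angle_coeffs _ _ T1 T2) as [HA HB]. clear T1 T2.
  destruct (fixed_point_coeffs a b c d x y Hdet Hy Hr Hfix) as [HD [-> ->]].
  set (u := c * x + d) in *.
  assert (Hu : u = 1 / 2 \/ u = - (1 / 2)).
  { assert (E : (u - 1 / 2) * (u + 1 / 2) = 0) by nra.
    destruct (Rmult_integral _ _ E); [left|right]; lra. }
  assert (Hcy : c * y = sqrt 3 * u).
  { transitivity (4 * (u * u) * (c * y)); [destruct Hu as [-> | ->]; field|].
    replace (4 * (u * u) * (c * y)) with (2 * u * (2 * u * (c * y))) by ring.
    rewrite HB; field. }
  assert (Hc : c = 2 * u * (sqrt 3 / (2 * y))).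
  { apply (Rmult_eq_reg_r y); [|lra]. rewrite Hcy; field; lra. }
  replace d with (u - c * x) by (unfold u; ring).
  unfold rot_std; destruct Hu as [Hu|Hu]; rewrite Hu in Hc; rewrite Hc, Hu;
    [left|right; unfold mneg; simpl]; apply mob_eq; field; lra.
Qed.

(* Comparing with the point [i (1 + |z|^2) / 2] of [e0] forces [|z| = 1]. *)
Lemma proj_e0_unit x y : 0 < y ->
  (forall q, 0 < py q -> on_geod e0 q -> hcosh (mkPt x y) pI <= hcosh (mkPt x y) q) ->
  x ^ 2 + y ^ 2 = 1.
Proof.
  intros Hy H.
  set (Y := (1 + (x ^ 2 + y ^ 2)) / 2).
  assert (HY : 0 < Y) by (unfold Y; nra).
  specialize (H (mkPt 0 Y) HY). unfold on_geod, sidef, hcosh in H; cbn [e0 gtail ghead px py pI] in H.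
  specialize (H ltac:(ring)).
  assert (H1 : Y * (x ^ 2 + (y - 1) ^ 2) <= x ^ 2 + (y - Y) ^ 2).
  { apply (Rmult_le_compat_l (2 * y * Y)) in H; [|nra].
    replace (2 * y * Y * (1 + ((x - 0) ^ 2 + (y - 1) ^ 2) / (2 * y * 1)))
      with (2 * y * Y + Y * (x ^ 2 + (y - 1) ^ 2)) in H by (field; lra).
    replace (2 * y * Y * (1 + ((x - 0) ^ 2 + (y - Y) ^ 2) / (2 * y * Y)))
      with (2 * y * Y + (x ^ 2 + (y - Y) ^ 2)) in H by (field; lra).
    lra. }
  assert (H2 : (x ^ 2 + y ^ 2 - 1) ^ 2 <= 0) by (unfold Y in H1; nra).
  nra.
Qed.

Lemma rot_std_e0_tail x y : 0 < y ->
  gtail (act_geod (rot_std x y) e0) = Fin ((y + sqrt 3 * x) / sqrt 3).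
Proof.
  intros Hy. pose proof Rlt_sqrt3_0.
  unfold rot_std, act_geod, e0, act_bpt; simpl.
  case_Req; [exfalso; assert (0 < sqrt 3 / (2 * y)) by (apply Rdiv_lt_0_compat; lra); lra|].
  f_equal; field; lra.
Qed.

Lemma rot_std_e0_head x y : 0 < y -> y <> sqrt 3 * x ->
  ghead (act_geod (rot_std x y) e0) = Fin (sqrt 3 / (sqrt 3 * x - y)).
Proof.
  intros Hy Hne. pose proof Rlt_sqrt3_0.
  unfold rot_std, act_geod, e0, act_bpt; cbn [ma mb mc md gtail ghead].
  case_Req.
  - exfalso; apply Hne.
    assert (E2 : y - sqrt 3 * x
                 = 2 * y * (sqrt 3 / (2 * y) * 0 + (1 / 2 - sqrt 3 / (2 * y) * x)))
      by (field; lra).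
    rewrite E, Rmult_0_r in E2; lra.
  - f_equal. field. repeat split; intros E'; apply Hne; lra.
Qed.

Lemma rot_std_e0_head_Inf x y : 0 < y -> y = sqrt 3 * x ->
  ghead (act_geod (rot_std x y) e0) = Inf.
Proof.
  intros Hy ->. pose proof Rlt_sqrt3_0.
  unfold rot_std, act_geod, e0, act_bpt; cbn [ma mb mc md gtail ghead].
  case_Req; auto. exfalso; apply E. field. nra.
Qed.

Lemma rot_std_inv_e0 x y : 0 < y -> 0 < x ->
  act_geod (madj (rot_std x y)) e0
  = mkGeod (Fin ((sqrt 3 * x - y) / sqrt 3)) (Fin (sqrt 3 / (sqrt 3 * x + y))).
Proof.
  intros Hy Hx. pose proof Rlt_sqrt3_0.
  assert (0 < sqrt 3 / (2 * y)) by (apply Rdiv_lt_0_compat; lra).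
  unfold rot_std, madj, act_geod, e0, act_bpt; cbn [ma mb mc md gtail ghead].
  f_equal; case_Req; try (exfalso; nra); f_equal; field; nra.
Qed.

Lemma Rdiv_lt_cross a b c d : 0 < b -> 0 < d -> a * d < c * b -> a / b < c / d.
Proof.
  intros Hb Hd H.
  replace (a / b) with (a * d * / (b * d)) by (field; lra).
  replace (c / d) with (c * b * / (b * d)) by (field; lra).
  apply Rmult_lt_compat_r; auto. apply Rinv_0_lt_compat; nra.
Qed.

(* Otherwise [R_* e0] ends at [∞], or its endpoints have opposite signs and it crosses
   [e0]. *)
Lemma rot_std_slope x y : 0 < x -> 0 < y ->
  closures_disjoint e0 (act_geod (rot_std x y) e0) -> y < sqrt 3 * x.
Proof.
  intros Hx Hy [_ [Htail_head [_ [_ Hmeet]]]]. pose proof Rlt_sqrt3_0.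
  destruct (Rtotal_order y (sqrt 3 * x)) as [|[E|E]]; auto; exfalso.
  - apply Htail_head. rewrite rot_std_e0_head_Inf; auto.
  - apply Hmeet.
    assert (HT := rot_std_e0_tail x y Hy). assert (HH := rot_std_e0_head x y Hy ltac:(lra)).
    destruct (act_geod (rot_std x y) e0) as [T Hd]; simpl in HT, HH; subst.
    set (u := (y + sqrt 3 * x) / sqrt 3). set (v := sqrt 3 / (sqrt 3 * x - y)).
    assert (Hu : 0 < u) by (apply Rdiv_lt_0_compat; nra).
    assert (Hv : v < 0)
      by (unfold v, Rdiv; assert (/ (sqrt 3 * x - y) < 0) by (apply Rinv_lt_0_compat; lra); nra).
    exists (mkPt 0 (sqrt (- (u * v)))).
    unfold on_geod, sidef; cbn [e0 gtail ghead px py].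
    rewrite pow2_sqrt by nra. repeat split; [apply sqrt_lt_R0; nra|ring|ring].
Qed.

(* The only properties of [R_*] used below. *)
Record good_rotation (Rs : mob) : Prop := {
  good_mdet : mdet Rs = 1;
  good_order3 : peq (mmul Rs (mmul Rs Rs)) mid;
  good_side1 : exists u v, 0 < u < v /\ act_geod Rs e0 = mkGeod (Fin u) (Fin v);
  good_side2 : exists u v, 0 < u < v /\ act_geod (mmul Rs Rs) e0 = mkGeod (Fin u) (Fin v);
  good_center : exists p, 0 < py p /\ 0 < px p /\ act_pt Rs p = p }.

Lemma order3_of_trace g : mdet g = 1 -> (ma g + md g) ^ 2 = 1 -> peq (mmul g (mmul g g)) mid.
Proof.
  intros Hd Ht. rewrite mcube_trace; cbv zeta. rewrite Hd, Ht.
  destruct g as [a b c d]; simpl in *.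
  assert (E : (a + d - 1) * (a + d + 1) = 0) by nra.
  destruct (Rmult_integral _ _ E); [right|left]; unfold mneg, mid; simpl;
    apply mob_eq; nra.
Qed.

Lemma madj_order3 g : mdet g = 1 -> peq (mmul g (mmul g g)) mid -> peq (madj g) (mmul g g).
Proof.
  intros Hd H3.
  apply peq_trans with (mmul (madj g) (mmul g (mmul g g))).
  - rewrite <- (mmul_mid_r (madj g)) at 1. apply peq_mmul_l, peq_sym, H3.
  - rewrite <- mmul_assoc, mdet1_madj_l, mmul_mid_l by auto. apply peq_refl.
Qed.

Lemma good_rotation_of Rs p :
  is_rotation Rs p (- (2 * PI / 3)) ->
  (forall q, 0 < py q -> on_geod e0 q -> hcosh p pI <= hcosh p q) ->
  (forall s s', In s (sides Rs) -> In s' (sides Rs) -> s <> s' -> closures_disjoint s s') ->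
  (forall z, hDelta0 z -> hDelta Rs p z) ->
  good_rotation Rs.
Proof.
  intros Hrot Hproj Hdisj Hcont. pose proof sqrt3_sq as Hs3. pose proof Rlt_sqrt3_0.
  destruct p as [x y]. assert (Hy : 0 < y) by apply Hrot.
  assert (Hr : x ^ 2 + y ^ 2 = 1) by (apply proj_e0_unit; auto).
  assert (Hx : 0 < x).
  { destruct (Hcont (mkPt (1 / 2) 1)) as [_ Hside]; [unfold hDelta0; simpl; lra|].
    specialize (Hside e0 (or_introl eq_refl)). unfold sidef, e0 in Hside; simpl in Hside; nra. }
  assert (Hdet : mdet Rs = 1) by apply Hrot.
  assert (Hpeq : peq Rs (rot_std x y)) by (destruct Rs; apply rotation_rot_std; auto).
  assert (H3 : peq (mmul Rs (mmul Rs Rs)) mid).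
  { apply order3_of_trace; auto.
    destruct Hpeq as [-> | ->]; unfold rot_std, mneg; simpl; field; lra. }
  assert (HR : act_geod Rs e0 = act_geod (rot_std x y) e0) by (apply act_geod_peq; auto).
  assert (Hslope : y < sqrt 3 * x).
  { apply rot_std_slope; auto. rewrite <- HR. apply Hdisj; [now left|now right; left|].
    rewrite HR; intros E; apply f_equal with (f := gtail) in E.
    rewrite rot_std_e0_tail in E; auto; discriminate. }
  assert (Hprod : (y + sqrt 3 * x) * (sqrt 3 * x - y) < 3) by nra.
  split; auto.
  - exists ((y + sqrt 3 * x) / sqrt 3), (sqrt 3 / (sqrt 3 * x - y)).
    split; [split; [apply Rdiv_lt_0_compat; nra|apply Rdiv_lt_cross; nra]|].
    rewrite HR, <- rot_std_e0_tail, <- rot_std_e0_head by lra.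
    destruct (act_geod _ _); reflexivity.
  - exists ((sqrt 3 * x - y) / sqrt 3), (sqrt 3 / (sqrt 3 * x + y)).
    split; [split; [apply Rdiv_lt_0_compat; nra|apply Rdiv_lt_cross; nra]|].
    rewrite <- rot_std_inv_e0 by auto.
    apply act_geod_peq, peq_trans with (madj Rs);
      [apply peq_sym, madj_order3|apply peq_madj]; auto.
  - exists (mkPt x y); simpl; repeat split; auto. apply Hrot.
Qed.

(** * The triangle Δ and the normal form in Γ *)

Fixpoint mpow (g : mob) (n : nat) : mob :=
  match n with O => mid | S n => mmul g (mpow g n) end.

Lemma mpow_succ_r g n : mmul (mpow g n) g = mpow g (S n).
Proof.
  induction n as [|n IH]; simpl; [rewrite mmul_mid_l, mmul_mid_r; auto|].
  rewrite mmul_assoc, IH; reflexivity.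
Qed.

Lemma mpow_mdet g n : mdet g = 1 -> mdet (mpow g n) = 1.
Proof. intros Hg; induction n; simpl; rewrite ?mdet_mmul, ?Hg, ?IHn; [apply mdet_mid|ring]. Qed.

(* Only [k] mod 3 matters, as [R_*^3 = ±1]. *)
Definition side (Rs : mob) (k : nat) : geod := act_geod (mpow Rs k) e0.

Definition in_tri (Rs : mob) (z : pt) : Prop := 0 < py z /\ forall k, 0 < sidef (side Rs k) z.
Definition in_tri_cl (Rs : mob) (z : pt) : Prop :=
  0 < py z /\ forall k, 0 <= sidef (side Rs k) z.

Lemma side_0 Rs : side Rs 0 = e0.
Proof. apply act_geod_mid. Qed.

Section Triangle.
Variable Rs : mob.
Hypothesis HG : good_rotation Rs.

Let mdet_R : mdet Rs = 1 := good_mdet Rs HG.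

Lemma mpow_mdet_R n : mdet (mpow Rs n) = 1.
Proof. apply mpow_mdet, mdet_R. Qed.

Lemma mpow3 : peq (mpow Rs 3) mid.
Proof. simpl; rewrite mmul_mid_r; apply (good_order3 Rs HG). Qed.

Lemma side_succ k : act_geod Rs (side Rs k) = side Rs (S k).
Proof. unfold side; simpl; rewrite act_geod_mmul; rewrite ?mpow_mdet_R, ?mdet_R; auto; lra. Qed.

Lemma side_3 : side Rs 3 = e0.
Proof. unfold side; rewrite (act_geod_peq _ _ _ mpow3); apply act_geod_mid. Qed.

Lemma side_cases k : side Rs k = e0 \/ side Rs k = side Rs 1 \/ side Rs k = side Rs 2.
Proof.
  induction k as [|k IH]; [left; apply side_0|].
  rewrite <- side_succ. destruct IH as [-> | [-> | ->]].
  - right; left; rewrite <- side_succ, side_0; reflexivity.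
  - right; right; apply side_succ.
  - left; rewrite side_succ; apply side_3.
Qed.

Lemma side_halfcircle k : (k = 1 \/ k = 2)%nat ->
  exists u v, 0 < u < v /\ side Rs k = mkGeod (Fin u) (Fin v).
Proof.
  unfold side; intros [-> | ->]; simpl; rewrite mmul_mid_r;
    [apply (good_side1 Rs HG)|apply (good_side2 Rs HG)].
Qed.

Lemma sidef_R k v : 0 < py v ->
  exists K, 0 < K /\ sidef (side Rs (S k)) (act_pt Rs v) = K * sidef (side Rs k) v.
Proof. intros Hv; rewrite <- side_succ; apply sidef_act; auto; rewrite mdet_R; lra. Qed.

Lemma sidef_mpow_e0 b v : 0 < py v ->
  exists K, 0 < K /\ sidef (side Rs b) (act_pt (mpow Rs b) v) = K * sidef e0 v.
Proof. intros Hv; apply sidef_act; auto; rewrite mpow_mdet_R; lra. Qed.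

Lemma e0_left_of_side k z : (k = 1 \/ k = 2)%nat -> on_geod e0 z -> 0 < py z ->
  0 < sidef (side Rs k) z.
Proof.
  intros Hk Hon Hy. destruct (side_halfcircle k Hk) as [u [v [Huv ->]]].
  apply sidef_halfcircle_axis; auto. unfold on_geod in Hon; rewrite sidef_e0 in Hon; auto.
Qed.

Lemma right_of_side_left_of_e0 k z : (k = 1 \/ k = 2)%nat -> 0 < py z ->
  sidef (side Rs k) z <= 0 -> 0 < sidef e0 z.
Proof.
  intros Hk Hy H. destruct (side_halfcircle k Hk) as [u [v [Huv E]]]; rewrite E in H.
  rewrite sidef_e0; eapply sidef_halfcircle_nonpos; eauto.
Qed.

Lemma side_pred k : exists k', side Rs k = side Rs (S k').
Proof. destruct k as [|k]; [exists 2%nat; rewrite side_0, side_3|exists k]; reflexivity. Qed.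

Lemma sidef_all_mpow (P : R -> Prop) b v :
  (forall K x, 0 < K -> P x -> P (K * x)) -> 0 < py v ->
  (forall k, P (sidef (side Rs k) v)) ->
  forall k, P (sidef (side Rs k) (act_pt (mpow Rs b) v)).
Proof.
  intros HP Hv Hk. induction b as [|b IH]; simpl; [rewrite act_pt_mid; auto|].
  rewrite act_pt_mmul1 by (auto using mpow_mdet_R).
  intros k; destruct (side_pred k) as [k' ->].
  destruct (sidef_R k' (act_pt (mpow Rs b) v)) as [K [HK ->]];
    auto using act_pt_py_pos1, mpow_mdet_R.
Qed.

Lemma in_tri_mpow b v : in_tri Rs v -> in_tri Rs (act_pt (mpow Rs b) v).
Proof.
  intros [Hy Hk]; split; auto using act_pt_py_pos1, mpow_mdet_R.
  apply sidef_all_mpow; auto. intros K x HK Hx; nra.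
Qed.

Lemma in_tri_cl_mpow b v : in_tri_cl Rs v -> in_tri_cl Rs (act_pt (mpow Rs b) v).
Proof.
  intros [Hy Hk]; split; auto using act_pt_py_pos1, mpow_mdet_R.
  apply sidef_all_mpow; auto. intros K x HK Hx; nra.
Qed.

Lemma in_tri_cl_of_e0 z : on_geod e0 z -> 0 < py z -> in_tri_cl Rs z.
Proof.
  intros Hon Hy; split; auto.
  intros k; destruct (side_cases k) as [-> | [-> | ->]]; [unfold on_geod in Hon; lra|..];
    apply Rlt_le, e0_left_of_side; auto.
Qed.

Lemma in_tri_center : exists p, in_tri Rs p.
Proof.
  destruct (good_center Rs HG) as [p [Hy [Hx Hfix]]].
  exists p; split; auto.
  induction k as [|k IH]; [rewrite side_0, sidef_e0; auto|].
  destruct (sidef_R k p Hy) as [K [HK E]]. rewrite Hfix in E. rewrite E; nra.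
Qed.

End Triangle.

Fixpoint word (Rs : mob) (bs : list nat) : mob :=
  match bs with [] => mid | b :: bs => mmul (mmul Iinv (mpow Rs b)) (word Rs bs) end.

Definition rot_exps (bs : list nat) : Prop := Forall (fun b => b = 1%nat \/ b = 2%nat) bs.

(* The reduced words of the free product Z/2 * Z/3, up to sign. *)
Definition normal_form (Rs g : mob) : Prop :=
  exists a, (a < 3)%nat /\
  (peq g (mpow Rs a) \/
   exists bs c, rot_exps bs /\ (c < 3)%nat /\ peq g (mmul (mpow Rs a) (word Rs (bs ++ [c])))).

Lemma word_app Rs bs cs : word Rs (bs ++ cs) = mmul (word Rs bs) (word Rs cs).
Proof.
  induction bs as [|b bs IH]; simpl; [rewrite mmul_mid_l; auto|].
  rewrite IH, !mmul_assoc; reflexivity.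
Qed.

Lemma word_single Rs b : word Rs [b] = mmul Iinv (mpow Rs b).
Proof. simpl; apply mmul_mid_r. Qed.

Lemma word_snoc0 Rs bs : word Rs (bs ++ [0%nat]) = mmul (word Rs bs) Iinv.
Proof. rewrite word_app, word_single; simpl; rewrite mmul_mid_r; auto. Qed.

Lemma word_snoc0_Iinv Rs bs : peq (mmul (word Rs (bs ++ [0%nat])) Iinv) (word Rs bs).
Proof.
  rewrite word_snoc0, mmul_assoc, Iinv_sq, mmul_mneg_r, mmul_mid_r. apply peq_mneg.
Qed.

Lemma word_mdet Rs bs : mdet Rs = 1 -> mdet (word Rs bs) = 1.
Proof.
  intros HR; induction bs as [|b bs IH]; simpl; [apply mdet_mid|].
  rewrite !mdet_mmul, IH, Iinv_mdet, mpow_mdet; auto; ring.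
Qed.

Lemma word_Iinv_cases Rs bs c : rot_exps bs -> (c < 3)%nat ->
  peq (mmul (word Rs (bs ++ [c])) Iinv) mid \/
  exists bs' c', rot_exps bs' /\ (c' < 3)%nat /\
    peq (mmul (word Rs (bs ++ [c])) Iinv) (word Rs (bs' ++ [c'])).
Proof.
  intros Hbs Hc. destruct (Nat.eq_dec c 0) as [->|Hne].
  - assert (H0 := word_snoc0_Iinv Rs bs).
    clear Hc; revert Hbs H0; induction bs as [|b bs _] using rev_ind; intros Hbs H0; auto.
    apply Forall_app in Hbs as [Hbs Hb]; inversion Hb; subst.
    right; exists bs, b; repeat split; auto; lia.
  - right; exists (bs ++ [c]), 0%nat; repeat split; [|lia|rewrite word_snoc0; apply peq_refl].
    apply Forall_app; split; auto; constructor; [lia|constructor].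
Qed.

Section NormalForm.
Variable Rs : mob.
Hypothesis HG : good_rotation Rs.

Lemma mpow_succ_mod a : (a < 3)%nat ->
  exists a', (a' < 3)%nat /\ peq (mmul (mpow Rs a) Rs) (mpow Rs a').
Proof.
  intros Ha; rewrite mpow_succ_r.
  destruct (Nat.eq_dec a 2) as [->|Hne]; [exists 0%nat; split; [lia|apply (mpow3 Rs HG)]|].
  exists (S a); split; [lia|apply peq_refl].
Qed.

Lemma normal_form_peq g g' : normal_form Rs g -> peq g' g -> normal_form Rs g'.
Proof.
  intros [a [Ha [H|[bs [c [Hbs [Hc H]]]]]]] E; exists a; split; auto.
  - left; eapply peq_trans; eauto.
  - right; exists bs, c; repeat split; auto; eapply peq_trans; eauto.
Qed.

Lemma normal_form_mul_R g : normal_form Rs g -> normal_form Rs (mmul g Rs).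
Proof.
  intros [a [Ha [H|[bs [c [Hbs [Hc H]]]]]]].
  - destruct (mpow_succ_mod a Ha) as [a' [Ha' E]].
    exists a'; split; auto; left.
    eapply peq_trans; [apply peq_mmul; [exact H|apply peq_refl]|exact E].
  - destruct (mpow_succ_mod c Hc) as [c' [Hc' E]].
    exists a; split; auto; right; exists bs, c'; repeat split; auto.
    eapply peq_trans; [apply peq_mmul; [exact H|apply peq_refl]|].
    rewrite !word_app, !word_single, !mmul_assoc.
    do 3 apply peq_mmul_l. exact E.
Qed.

Lemma normal_form_mul_I g : normal_form Rs g -> normal_form Rs (mmul g Iinv).
Proof.
  intros [a [Ha [H|[bs [c [Hbs [Hc H]]]]]]]; exists a; split; auto.
  - right; exists [], 0%nat; repeat split; [constructor|lia|].
    simpl; rewrite !mmul_mid_r. apply peq_mmul; auto using peq_refl.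
  - assert (HI : peq (mmul g Iinv) (mmul (mpow Rs a) (mmul (word Rs (bs ++ [c])) Iinv)))
      by (rewrite <- mmul_assoc; apply peq_mmul; auto using peq_refl).
    destruct (word_Iinv_cases Rs bs c Hbs Hc) as [E|[bs' [c' [Hbs' [Hc' E]]]]].
    + left; rewrite <- (mmul_mid_r (mpow Rs a)).
      eapply peq_trans; [exact HI|apply peq_mmul_l, E].
    + right; exists bs', c'; repeat split; auto.
      eapply peq_trans; [exact HI|apply peq_mmul_l, E].
Qed.

Lemma normal_form_of_gen g : gen (Gamma_gens Rs) g -> normal_form Rs g.
Proof.
  induction 1 as [|g s _ IH Hs].
  - exists 0%nat; split; [lia|left; apply peq_refl].
  - destruct Hs as [<-|[<-|[<-|[<-|[]]]]].
    + apply normal_form_mul_I; auto.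
    + rewrite madj_Iinv, mmul_mneg_r.
      apply normal_form_peq with (mmul g Iinv); [apply normal_form_mul_I; auto|apply peq_mneg].
    + apply normal_form_mul_R; auto.
    + apply normal_form_peq with (mmul (mmul g Rs) Rs);
        [apply normal_form_mul_R, normal_form_mul_R; auto|].
      rewrite mmul_assoc; apply peq_mmul_l, madj_order3; [apply HG|apply HG].
Qed.

Lemma normal_form_of_in_grp g : in_grp (Gamma_gens Rs) g -> normal_form Rs g.
Proof. intros [h [Hh E]]; eapply normal_form_peq; eauto; apply normal_form_of_gen; auto. Qed.

End NormalForm.

(** * Ping-pong and the leaves *)

Lemma gen_mmul S g h : gen S g -> gen S h -> gen S (mmul g h).
Proof.
  intros Hg Hh; induction Hh as [|h s Hh IH Hs]; [rewrite mmul_mid_r; auto|].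
  rewrite <- mmul_assoc; constructor; auto.
Qed.

Lemma in_grp_mmul S g h : in_grp S g -> in_grp S h -> in_grp S (mmul g h).
Proof.
  intros [g' [Hg Eg]] [h' [Hh Eh]]; exists (mmul g' h'); split;
    [apply gen_mmul|apply peq_mmul]; auto.
Qed.

Lemma in_grp_gen S s : In s S -> in_grp S s.
Proof. intros H; exists s; split; [rewrite <- mmul_mid_l; repeat constructor; auto|apply peq_refl]. Qed.

Lemma in_grp_mid S : in_grp S mid.
Proof. exists mid; split; [constructor|apply peq_refl]. Qed.

Lemma in_grp_peq S g g' : in_grp S g -> peq g' g -> in_grp S g'.
Proof. intros [h [Hh E]] E'; exists h; split; auto; eapply peq_trans; eauto. Qed.

Lemma in_grp_madj S g : (forall s, In s S -> in_grp S (madj s)) ->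
  in_grp S g -> in_grp S (madj g).
Proof.
  intros HS [h [Hh E]]. apply in_grp_peq with (madj h); [|apply peq_madj; auto].
  clear E; induction Hh as [|h s Hh IH Hs]; [rewrite madj_mid; apply in_grp_mid|].
  rewrite madj_mmul; apply in_grp_mmul; auto.
Qed.

Lemma same_unor_sym l l' : same_unor l l' -> same_unor l' l.
Proof. intros [-> | ->]; [left|right]; rewrite ?grev_grev; auto. Qed.

Lemma same_unor_trans l1 l2 l3 : same_unor l1 l2 -> same_unor l2 l3 -> same_unor l1 l3.
Proof. intros [-> | ->] [-> | ->]; unfold same_unor; rewrite ?grev_grev; auto. Qed.

Lemma same_unor_grev l l' : same_unor l l' -> same_unor (grev l) l'.
Proof. intros [-> | ->]; unfold same_unor; rewrite ?grev_grev; auto. Qed.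

Lemma same_unor_act g l l' : same_unor l l' -> same_unor (act_geod g l) (act_geod g l').
Proof. intros [-> | ->]; [left|right]; rewrite ?act_geod_grev; auto. Qed.

Lemma same_unor_on l l' z : same_unor l l' -> on_geod l z -> on_geod l' z.
Proof. intros [-> | ->]; unfold on_geod; rewrite ?sidef_grev; lra. Qed.

Lemma grev_act_e0 g : mdet g <> 0 -> grev (act_geod g e0) = act_geod (mmul g Iinv) e0.
Proof.
  intros Hg. rewrite act_geod_mmul by (rewrite ?Iinv_mdet; auto; lra).
  rewrite Iinv_e0, act_geod_grev; auto.
Qed.

Lemma is_leaf_grev Rs l : is_leaf Rs l -> is_leaf Rs (grev l).
Proof. intros [g [s [Hg [Hs Hl]]]]; exists g, s; repeat split; auto; apply same_unor_grev; auto. Qed.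

Lemma in_grp_mdet S g : (forall s, In s S -> mdet s = 1) -> in_grp S g -> mdet g = 1.
Proof.
  intros HS [h [Hh E]]. rewrite (peq_mdet _ _ E). clear E.
  induction Hh as [|h s _ IH Hs]; [apply mdet_mid|].
  rewrite mdet_mmul, IH, (HS s Hs); ring.
Qed.

Section PingPong.
Variable Rs : mob.
Hypothesis HG : good_rotation Rs.

Let mdet_R : mdet Rs = 1 := good_mdet Rs HG.

Lemma Gamma_mdet g : in_grp (Gamma_gens Rs) g -> mdet g = 1.
Proof.
  apply in_grp_mdet.
  intros s [<-|[<-|[<-|[<-|[]]]]]; rewrite ?mdet_madj; auto using Iinv_mdet.
Qed.

Lemma word_act_cons b bs v : 0 < py v ->
  act_pt (word Rs (b :: bs)) v = act_pt Iinv (act_pt (mpow Rs b) (act_pt (word Rs bs) v)).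
Proof.
  intros Hv; simpl.
  assert (Hb := mpow_mdet_R Rs HG b). assert (Hw := word_mdet Rs bs mdet_R).
  rewrite !act_pt_mmul1; rewrite ?mdet_mmul, ?Hb, ?Hw, ?Iinv_mdet; auto using act_pt_py_pos1; ring.
Qed.

Lemma mpow_flip b w : (b = 1 \/ b = 2)%nat -> 0 < py w -> sidef e0 w <= 0 ->
  0 < sidef e0 (act_pt (mpow Rs b) w).
Proof.
  intros Hb Hw H.
  destruct (sidef_mpow_e0 Rs HG b w Hw) as [K [HK E]].
  apply (right_of_side_left_of_e0 Rs HG b); auto using act_pt_py_pos1, mpow_mdet_R.
  rewrite E; nra.
Qed.

Lemma Iinv_flip z : 0 < py z -> 0 < sidef e0 z -> sidef e0 (act_pt Iinv z) < 0.
Proof. intros Hz H; destruct (Iinv_sidef_e0 z Hz) as [K [HK ->]]; nra. Qed.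

Lemma Iinv_flip_weak z : 0 < py z -> 0 <= sidef e0 z -> sidef e0 (act_pt Iinv z) <= 0.
Proof. intros Hz H; destruct (Iinv_sidef_e0 z Hz) as [K [HK ->]]; nra. Qed.

(* Ping-pong: [I R^c] sends the closed triangle into the closed right side of [e0], and
   [I R^b], [b] in {1, 2}, sends that into the open right side. *)
Lemma ping_pong bs c v : rot_exps bs -> in_tri_cl Rs v ->
  sidef e0 (act_pt (word Rs (bs ++ [c])) v) <= 0 /\
  (bs <> [] -> sidef e0 (act_pt (word Rs (bs ++ [c])) v) < 0).
Proof.
  intros Hbs Hv; assert (Hy : 0 < py v) by apply Hv.
  induction Hbs as [|b bs Hb Hbs IH]; simpl app; rewrite word_act_cons by auto.
  - simpl; rewrite act_pt_mid.
    destruct (in_tri_cl_mpow Rs HG c v Hv) as [Hy' Hk].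
    split; [|congruence]. apply Iinv_flip_weak; auto. rewrite <- (side_0 Rs); auto.
  - destruct IH as [IH _].
    assert (Hw := act_pt_py_pos1 _ v (word_mdet Rs (bs ++ [c]) mdet_R) Hy).
    split; [apply Rlt_le|intros _]; apply Iinv_flip, mpow_flip;
      auto using act_pt_py_pos1, mpow_mdet_R.
Qed.

Lemma ping_pong_open bs c v : rot_exps bs -> in_tri Rs v ->
  sidef e0 (act_pt (word Rs (bs ++ [c])) v) < 0.
Proof.
  intros Hbs Hv. destruct bs as [|b bs].
  - simpl app; rewrite word_act_cons by apply Hv; simpl; rewrite act_pt_mid.
    destruct (in_tri_mpow Rs HG c v Hv) as [Hy' Hk].
    apply Iinv_flip; auto. rewrite <- (side_0 Rs); auto.
  - apply (ping_pong (b :: bs) c v Hbs); [split; [apply Hv|intros k; apply Rlt_le, Hv]|].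
    discriminate.
Qed.

End PingPong.

Lemma lt3_cases a : (a < 3)%nat -> a = 0%nat \/ (a = 1 \/ a = 2)%nat.
Proof. lia. Qed.

Section Leaves.
Variable Rs : mob.
Hypothesis HG : good_rotation Rs.

Let mdet_R : mdet Rs = 1 := good_mdet Rs HG.

Lemma normal_word_mdet a bs c : mdet (mmul (mpow Rs a) (word Rs (bs ++ [c]))) = 1.
Proof. rewrite mdet_mmul, mpow_mdet_R, word_mdet; auto; ring. Qed.

Lemma normal_word_act a bs c v : 0 < py v ->
  act_pt (mmul (mpow Rs a) (word Rs (bs ++ [c]))) v
  = act_pt (mpow Rs a) (act_pt (word Rs (bs ++ [c])) v).
Proof. intros; apply act_pt_mmul1; auto using mpow_mdet_R, word_mdet. Qed.

Lemma leaf_avoids_tri h w : in_grp (Gamma_gens Rs) h -> in_tri Rs w ->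
  ~ on_geod (act_geod h e0) w.
Proof.
  intros Hh Hw Hon.
  destruct (normal_form_of_in_grp Rs HG h Hh) as [a [Ha [H|[bs [c [Hbs [Hc H]]]]]]];
    rewrite (act_geod_peq _ _ _ H) in Hon.
  - destruct Hw as [_ Hk]; specialize (Hk a); unfold on_geod, side in *; lra.
  - destruct (act_pt_surj _ w (normal_word_mdet a bs c) (proj1 Hw)) as [v [Hv ->]].
    apply on_act in Hon; [|rewrite normal_word_mdet; lra|auto].
    destruct (ping_pong Rs HG bs c v Hbs (in_tri_cl_of_e0 Rs HG v Hon Hv)) as [Hright _].
    destruct Hw as [_ Hk]; specialize (Hk a); rewrite normal_word_act in Hk by auto.
    destruct (sidef_mpow_e0 Rs HG a (act_pt (word Rs (bs ++ [c])) v)) as [K [HK E]];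
      [apply act_pt_py_pos1; auto using word_mdet|].
    rewrite E in Hk; nra.
Qed.

Lemma word_leaf_meets_e0 a bs c z : (a < 3)%nat -> rot_exps bs -> (c < 3)%nat ->
  0 < py z -> on_geod e0 z ->
  on_geod (act_geod (mmul (mpow Rs a) (word Rs (bs ++ [c]))) e0) z ->
  a = 0%nat /\ bs = [] /\ c = 0%nat.
Proof.
  intros Ha Hbs Hc Hz Hon0 Hon.
  destruct (act_pt_surj _ z (normal_word_mdet a bs c) Hz) as [v [Hv ->]].
  apply on_act in Hon; [|rewrite normal_word_mdet; lra|auto].
  rewrite normal_word_act in Hon0 by auto.
  set (u := act_pt (word Rs (bs ++ [c])) v) in Hon0.
  assert (Hu : 0 < py u) by (apply act_pt_py_pos1; auto using word_mdet).
  destruct (ping_pong Rs HG bs c v Hbs (in_tri_cl_of_e0 Rs HG v Hon Hv)) as [Hle Hlt].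
  fold u in Hle, Hlt. unfold on_geod in Hon0.
  destruct (lt3_cases a Ha) as [->|Ha12];
    [|exfalso; assert (X := mpow_flip Rs HG a u Ha12 Hu Hle); lra].
  simpl in Hon0; rewrite act_pt_mid in Hon0.
  destruct bs as [|b bs]; [|exfalso; specialize (Hlt ltac:(discriminate)); lra].
  repeat split; auto.
  destruct (lt3_cases c Hc) as [->|Hc12]; auto; exfalso.
  unfold u in Hon0; simpl app in Hon0; rewrite word_act_cons in Hon0 by auto.
  simpl in Hon0; rewrite act_pt_mid in Hon0.
  assert (Hcv : 0 < py (act_pt (mpow Rs c) v)) by auto using act_pt_py_pos1, mpow_mdet_R.
  destruct (Iinv_sidef_e0 _ Hcv) as [K [HK E]]. rewrite E in Hon0.
  destruct (sidef_mpow_e0 Rs HG c v Hv) as [K' [HK' E']]. unfold on_geod in Hon.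
  rewrite Hon, Rmult_0_r in E'.
  assert (X := e0_left_of_side Rs HG c (act_pt (mpow Rs c) v) Hc12).
  unfold on_geod in X; nra.
Qed.

Lemma leaf_meets_e0 h z : in_grp (Gamma_gens Rs) h -> 0 < py z -> on_geod e0 z ->
  on_geod (act_geod h e0) z -> same_unor e0 (act_geod h e0).
Proof.
  intros Hh Hz Hon0 Hon.
  destruct (normal_form_of_in_grp Rs HG h Hh) as [a [Ha [H|[bs [c [Hbs [Hc H]]]]]]];
    rewrite (act_geod_peq _ _ _ H) in *.
  - destruct (lt3_cases a Ha) as [->|Ha12]; [left; symmetry; apply side_0|exfalso].
    assert (X := e0_left_of_side Rs HG a z Ha12 Hon0 Hz). unfold on_geod, side in *; lra.
  - destruct (word_leaf_meets_e0 a bs c z Ha Hbs Hc Hz Hon0 Hon) as [-> [-> ->]].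
    right; simpl; rewrite !mmul_mid_r, mmul_mid_l, Iinv_e0, grev_grev; reflexivity.
Qed.

(* A stabilizer of the oriented [e0] keeps [p0] (in [Δ], left of [e0]) on the left and
   [I p0] on the right; the ping-pong moves one of them across. *)
Lemma word_not_stab_e0 a bs c : (a < 3)%nat -> rot_exps bs -> (c < 3)%nat ->
  act_geod (mmul (mpow Rs a) (word Rs (bs ++ [c]))) e0 <> e0.
Proof.
  intros Ha Hbs Hc He. set (h := mmul (mpow Rs a) (word Rs (bs ++ [c]))) in He.
  destruct (in_tri_center Rs HG) as [p0 Hp0].
  assert (Hpy : 0 < py p0) by apply Hp0.
  assert (Hp0e : 0 < sidef e0 p0) by (rewrite <- (side_0 Rs); apply Hp0).
  assert (Hkeep : forall z, 0 < py z ->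
    exists K, 0 < K /\ sidef e0 (act_pt h z) = K * sidef e0 z).
  { intros z Hz. destruct (sidef_act h e0 z) as [K [HK E]]; [unfold h; rewrite normal_word_mdet; lra|auto|].
    rewrite He in E; eauto. }
  destruct (lt3_cases a Ha) as [->|Ha12].
  { destruct (Hkeep p0 Hpy) as [K [HK E]]. unfold h in E.
    rewrite normal_word_act in E by auto; simpl in E; rewrite act_pt_mid in E.
    assert (X := ping_pong_open Rs HG bs c p0 Hbs Hp0); nra. }
  assert (Hq : 0 < py (act_pt Iinv p0)) by (apply act_pt_py_pos1; auto using Iinv_mdet).
  destruct (Hkeep _ Hq) as [K [HK E]].
  assert (Hq' := Iinv_flip _ Hpy Hp0e).
  unfold h in E; rewrite <- act_pt_mmul1, mmul_assoc, act_pt_mmul1 in E;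
    auto using Iinv_mdet, mpow_mdet_R, normal_word_mdet;
    try (rewrite mdet_mmul, word_mdet, Iinv_mdet; auto; ring).
  destruct (word_Iinv_cases Rs bs c Hbs Hc) as [E'|[bs' [c' [Hbs' [Hc' E']]]]];
    rewrite (act_pt_peq _ _ _ E') in E.
  - rewrite act_pt_mid in E.
    destruct (in_tri_mpow Rs HG a p0 Hp0) as [_ Hk].
    specialize (Hk 0%nat); rewrite side_0 in Hk. nra.
  - assert (X := ping_pong_open Rs HG bs' c' p0 Hbs' Hp0).
    assert (Y := mpow_flip Rs HG a (act_pt (word Rs (bs' ++ [c'])) p0) Ha12
                   ltac:(apply act_pt_py_pos1; auto using word_mdet) ltac:(lra)).
    nra.
Qed.

Lemma stab_e0 h : in_grp (Gamma_gens Rs) h -> act_geod h e0 = e0 -> peq h mid.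
Proof.
  intros Hh He.
  destruct (normal_form_of_in_grp Rs HG h Hh) as [a [Ha [H|[bs [c [Hbs [Hc H]]]]]]];
    rewrite (act_geod_peq _ _ _ H) in He.
  - fold (side Rs a) in He.
    destruct (lt3_cases a Ha) as [->|Ha12]; [exact H|exfalso].
    destruct (side_halfcircle Rs HG a Ha12) as [u [v [_ E]]]. rewrite E in He; discriminate.
  - exfalso; exact (word_not_stab_e0 a bs c Ha Hbs Hc He).
Qed.

End Leaves.

Section Lamination.
Variable Rs : mob.
Hypothesis HG : good_rotation Rs.

Notation Gamma := (in_grp (Gamma_gens Rs)).

Lemma Gamma_I : Gamma Iinv.
Proof. apply in_grp_gen; left; auto. Qed.
Lemma Gamma_R : Gamma Rs.
Proof. apply in_grp_gen; right; right; left; auto. Qed.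
Lemma Gamma_madj g : Gamma g -> Gamma (madj g).
Proof.
  apply in_grp_madj; intros s [<-|[<-|[<-|[<-|[]]]]]; rewrite ?madj_madj;
    apply in_grp_gen; simpl; tauto.
Qed.

Lemma GammaO_Gamma g : in_grp (GammaO_gens Rs) g -> Gamma g.
Proof.
  intros [h [Hh E]]; apply in_grp_peq with h; auto; clear E.
  induction Hh as [|h s Hh IH Hs]; [apply in_grp_mid|apply in_grp_mmul; auto].
  destruct Hs as [<-|[<-|[<-|[<-|[]]]]];
    repeat apply in_grp_mmul; auto using Gamma_I, Gamma_R, Gamma_madj.
Qed.

Lemma leaf_orbit l : is_leaf Rs l -> exists g, Gamma g /\ same_unor l (act_geod g e0).
Proof.
  intros [g [s [Hg [Hs Hl]]]]. assert (Hd := Gamma_mdet Rs HG g Hg).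
  assert (HR := good_mdet Rs HG).
  destruct Hs as [<-|[<-|[<-|[]]]]; [exists g; auto| |].
  - exists (mmul g Rs); split; [apply in_grp_mmul; auto using Gamma_R|].
    rewrite act_geod_mmul; auto; lra.
  - exists (mmul g (mmul Rs Rs)); split; [repeat apply in_grp_mmul; auto using Gamma_R|].
    rewrite act_geod_mmul; rewrite ?mdet_mmul, ?HR; auto; lra.
Qed.

Lemma orbit_leaf g l : Gamma g -> same_unor l (act_geod g e0) -> is_leaf Rs l.
Proof. intros Hg H; exists g, e0; repeat split; auto; left; auto. Qed.

Lemma act_geod_e0_factor g g' : Gamma g -> Gamma g' ->
  act_geod g' e0 = act_geod g (act_geod (mmul (madj g) g') e0).
Proof.
  intros Hg Hg'. assert (Dg := Gamma_mdet Rs HG g Hg).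
  rewrite <- act_geod_mmul, <- mmul_assoc, mdet1_madj_r, mmul_mid_l; auto;
    rewrite ?mdet_mmul, ?mdet_madj, Dg, ?(Gamma_mdet Rs HG g' Hg'); lra.
Qed.

Lemma leaves_meet g g' z : Gamma g -> Gamma g' -> 0 < py z ->
  on_geod (act_geod g e0) z -> on_geod (act_geod g' e0) z ->
  same_unor (act_geod g e0) (act_geod g' e0).
Proof.
  intros Hg Hg' Hz H1 H2. assert (Dg := Gamma_mdet Rs HG g Hg).
  assert (Hh : Gamma (mmul (madj g) g')) by (apply in_grp_mmul; auto using Gamma_madj).
  rewrite (act_geod_e0_factor g g') in * by auto.
  destruct (act_pt_surj g z Dg Hz) as [v [Hv ->]].
  apply on_act in H1, H2; try lra; auto.
  apply same_unor_act, (leaf_meets_e0 Rs HG _ v); auto.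
Qed.

Lemma orbit_e0_inj g g' : Gamma g -> Gamma g' -> act_geod g e0 = act_geod g' e0 -> peq g' g.
Proof.
  intros Hg Hg' E. assert (Dg := Gamma_mdet Rs HG g Hg).
  assert (Hh : Gamma (mmul (madj g) g')) by (apply in_grp_mmul; auto using Gamma_madj).
  assert (He : act_geod (mmul (madj g) g') e0 = e0).
  { rewrite act_geod_mmul, <- E, act_geod_madj_l;
      rewrite ?mdet_madj, ?(Gamma_mdet Rs HG g' Hg'); auto; lra. }
  replace g' with (mmul g (mmul (madj g) g'))
    by (rewrite <- mmul_assoc, mdet1_madj_r, mmul_mid_l; auto).
  apply peq_trans with (mmul g mid); [apply peq_mmul_l, (stab_e0 Rs HG); auto|].
  rewrite mmul_mid_r; apply peq_refl.
Qed.

End Lamination.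

(** * Consecutive crossings *)

Lemma sidef_cpt_keeps_sign N m t0 t1 : 0 < mdet N -> t0 < t1 ->
  0 < sidef m (cpt N t0) -> (forall s, t0 < s < t1 -> ~ on_geod m (cpt N s)) ->
  (forall s, t0 < s < t1 -> 0 < sidef m (cpt N s)) /\ 0 <= sidef m (cpt N t1).
Proof.
  intros HN Ht H0 Hno. split.
  - intros s Hs. destruct (Rtotal_order 0 (sidef m (cpt N s))) as [|[E|E]]; auto; exfalso.
    + apply (Hno s Hs); unfold on_geod; auto.
    + destruct (sidef_cpt_ivt N m t0 s HN ltac:(lra) H0 E) as [s' [Hs' E']].
      apply (Hno s'); [lra|exact E'].
  - destruct (Rle_or_lt 0 (sidef m (cpt N t1))) as [|E]; auto; exfalso.
    destruct (sidef_cpt_ivt N m t0 t1 HN Ht H0 E) as [s' [Hs' E']].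
    apply (Hno s' Hs' E').
Qed.

Section Step.
Variable Rs : mob.
Hypothesis HG : good_rotation Rs.

Notation Gamma := (in_grp (Gamma_gens Rs)).

Lemma Gamma_mpow j : Gamma (mpow Rs j).
Proof.
  induction j; simpl; [apply in_grp_mid|apply in_grp_mmul; auto using Gamma_R].
Qed.

(* Just after crossing [e0], [c] runs inside [Δ], which no leaf meets; so the next leaf
   is a side [R^j e0] of [Δ], crossed from inside, i.e. oriented as [R^j I e0]. *)
Lemma next_leaf_e0 N t0 t1 l1 : 0 < mdet N -> t0 < t1 ->
  on_geod e0 (cpt N t0) -> (forall s, t0 < s -> left_of e0 (cpt N s)) ->
  (forall s, t0 < s < t1 -> forall h, Gamma h -> ~ on_geod (act_geod h e0) (cpt N s)) ->
  (exists h, Gamma h /\ same_unor l1 (act_geod h e0)) ->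
  on_geod l1 (cpt N t1) -> (forall s, s < t1 -> right_of l1 (cpt N s)) ->
  exists j, (j = 1 \/ j = 2)%nat /\ l1 = act_geod (mmul (mpow Rs j) Iinv) e0.
Proof.
  intros HN Ht Hon0 Hleft Hno [h1 [Hh1 Hl1]] Hon1 Hright.
  assert (Hsides : forall j, (j = 1 \/ j = 2)%nat ->
    (forall s, t0 < s < t1 -> 0 < sidef (side Rs j) (cpt N s)) /\
    0 <= sidef (side Rs j) (cpt N t1)).
  { intros j Hj. apply sidef_cpt_keeps_sign; auto.
    - apply e0_left_of_side; auto using cpt_py.
    - intros s Hs; apply (Hno s Hs), Gamma_mpow. }
  set (w := cpt N t1) in *.
  assert (Hj : exists j, (j = 1 \/ j = 2)%nat /\ on_geod (side Rs j) w).
  { destruct (proj2 (Hsides 1%nat ltac:(auto))) as [X1|X1];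
      [|exists 1%nat; split; [auto|symmetry; auto]].
    destruct (proj2 (Hsides 2%nat ltac:(auto))) as [X2|X2];
      [|exists 2%nat; split; [auto|symmetry; auto]].
    exfalso; apply (leaf_avoids_tri Rs HG h1 w Hh1); [|eapply same_unor_on; eauto].
    split; [apply cpt_py; auto|intros k].
    destruct (side_cases Rs HG k) as [-> | [-> | ->]]; [apply Hleft|..]; auto. }
  destruct Hj as [j [Hj Hw]]. exists j; split; auto.
  assert (Hsu : same_unor l1 (side Rs j)).
  { eapply same_unor_trans; [exact Hl1|apply same_unor_sym, (leaves_meet Rs HG _ _ w)];
      eauto using Gamma_mpow, cpt_py, same_unor_on. }
  destruct Hsu as [E|E].
  - exfalso. assert (A1 := Hright ((t0 + t1) / 2) ltac:(lra)).
    assert (A2 := proj1 (Hsides j Hj) ((t0 + t1) / 2) ltac:(lra)).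
    unfold right_of in A1; rewrite E in A1; lra.
  - rewrite E; apply grev_act_e0; rewrite (mpow_mdet_R Rs HG); lra.
Qed.

Definition gaps_leaf_free (M : mob) (t : Z -> R) : Prop :=
  forall (m : Z) s, t m < s < t (m + 1)%Z -> forall l, is_leaf Rs l -> ~ on_geod l (cpt M s).

Lemma next_leaf M ell t : 0 < mdet M ->
  (forall m, crosses_RL M (ell m) (t m)) -> (forall m, is_leaf Rs (ell m)) ->
  (forall m, t m < t (m + 1)%Z) -> gaps_leaf_free M t ->
  forall m g, Gamma g -> ell m = act_geod g e0 ->
  exists j, (j = 1 \/ j = 2)%nat /\ ell (m + 1)%Z = act_geod (mmul g (mmul (mpow Rs j) Iinv)) e0.
Proof.
  intros HM Hcr Hlf Hmono Hgap m g Hg Em.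
  assert (Dg := Gamma_mdet Rs HG g Hg).
  set (N := mmul (madj g) M).
  assert (HN : 0 < mdet N) by (unfold N; rewrite mdet_mmul, mdet_madj, Dg; lra).
  assert (Hc : forall s, cpt M s = act_pt g (cpt N s)) by (intros; apply cpt_act; auto).
  assert (Hgp : 0 < mdet g) by lra.
  assert (HNp := cpt_py N). 
  set (l1 := act_geod (madj g) (ell (m + 1)%Z)).
  assert (El1 : ell (m + 1)%Z = act_geod g l1) by (unfold l1; rewrite act_geod_madj_r; auto; lra).
  destruct (Hcr m) as [C0 [_ C2]], (Hcr (m + 1)%Z) as [D0 [D1 _]].
  rewrite Em, Hc in C0. rewrite El1, Hc in D0.
  destruct (next_leaf_e0 N (t m) (t (m + 1)%Z) l1 HN (Hmono m)) as [j [Hj Ej]].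
  - apply on_act in C0; auto.
  - intros s Hs; specialize (C2 s Hs); rewrite Em, Hc in C2; apply left_act in C2; auto.
  - intros s Hs h Hh Hon. apply (Hgap m s Hs (act_geod (mmul g h) e0)).
    + apply (orbit_leaf Rs (mmul g h)); [apply in_grp_mmul; auto|left; auto].
    + rewrite Hc, act_geod_mmul by (rewrite ?(Gamma_mdet Rs HG h Hh); lra).
      apply on_act; auto.
  - destruct (leaf_orbit Rs HG (ell (m + 1)%Z) (Hlf _)) as [h [Hh Hsu]].
    exists (mmul (madj g) h); split; [apply in_grp_mmul; auto using Gamma_madj|].
    unfold l1; rewrite act_geod_mmul by (rewrite ?mdet_madj, ?(Gamma_mdet Rs HG h Hh); lra).
    apply same_unor_act; auto.
  - apply on_act in D0; auto.
  - intros s Hs; specialize (D1 s Hs); rewrite El1, Hc in D1; apply right_act in D1; auto.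
  - exists j; split; auto. rewrite El1, Ej; symmetry; apply act_geod_mmul; [lra|].
    rewrite mdet_mmul, (mpow_mdet_R Rs HG), Iinv_mdet; lra.
Qed.

End Step.

Lemma incr_Z_lt (t : Z -> R) : (forall m, t m < t (m + 1)%Z) ->
  forall a b, (a < b)%Z -> t a < t b.
Proof.
  intros Ht a b Hab.
  replace b with (a + 1 + Z.of_nat (Z.to_nat (b - a - 1)))%Z by lia.
  induction (Z.to_nat (b - a - 1)) as [|n IH]; [rewrite Z.add_0_r; auto|].
  eapply Rlt_trans; [exact IH|].
  replace (a + 1 + Z.of_nat (S n))%Z with (a + 1 + Z.of_nat n + 1)%Z by lia. auto.
Qed.

Lemma incr_Z_le (t : Z -> R) : (forall m, t m < t (m + 1)%Z) ->
  forall a b, (a <= b)%Z -> t a <= t b.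
Proof.
  intros Ht a b Hab. destruct (Z.eq_dec a b) as [->|Hne]; [lra|].
  apply Rlt_le, incr_Z_lt; auto; lia.
Qed.

Lemma crosses_RL_rev M l t0 : 0 < mdet M ->
  crosses_RL M l t0 -> crosses_RL (mmul M Iinv) (grev l) (- t0).
Proof.
  intros HM [C0 [C1 C2]]. unfold crosses_RL, on_geod, left_of, right_of in *.
  rewrite !cpt_mmul_Iinv, sidef_grev, Ropp_involutive, C0 by auto.
  split; [ring|split; intros s Hs; rewrite cpt_mmul_Iinv, sidef_grev by auto].
  - specialize (C2 (- s) ltac:(lra)); lra.
  - specialize (C1 (- s) ltac:(lra)); lra.
Qed.

Section Crossings.
Variable Rs : mob.
Hypothesis HG : good_rotation Rs.

Notation Gamma := (in_grp (Gamma_gens Rs)).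

Lemma gaps_leaf_free_rev M t : 0 < mdet M -> gaps_leaf_free Rs M t ->
  gaps_leaf_free Rs (mmul M Iinv) (fun m => - t (- m)%Z).
Proof.
  intros HM Hgap m s Hs l Hl Hon. rewrite cpt_mmul_Iinv in Hon by auto.
  apply (Hgap (- (m + 1))%Z (- s) ltac:(replace (- (m + 1) + 1)%Z with (- m)%Z by lia; lra) l Hl Hon).
Qed.

Lemma prev_leaf M ell t : 0 < mdet M ->
  (forall m, crosses_RL M (ell m) (t m)) -> (forall m, is_leaf Rs (ell m)) ->
  (forall m, t m < t (m + 1)%Z) -> gaps_leaf_free Rs M t ->
  forall m g, Gamma g -> ell m = act_geod g e0 ->
  exists j, (j = 1 \/ j = 2)%nat /\ ell (m - 1)%Z = act_geod (mmul g (mmul Iinv (mpow Rs j))) e0.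
Proof.
  intros HM Hcr Hlf Hmono Hgap m g Hg Em.
  assert (Dg := Gamma_mdet Rs HG g Hg).
  destruct (next_leaf Rs HG (mmul M Iinv) (fun m => grev (ell (- m)%Z)) (fun m => - t (- m)%Z))
    with (m := (- m)%Z) (g := mmul g Iinv) as [j [Hj Ej]].
  - rewrite mdet_mmul, Iinv_mdet; lra.
  - intros m'; apply crosses_RL_rev; auto.
  - intros m'; apply is_leaf_grev; auto.
  - intros m'. specialize (Hmono (- (m' + 1))%Z).
    replace (- (m' + 1) + 1)%Z with (- m')%Z in Hmono by lia. lra.
  - apply gaps_leaf_free_rev; auto.
  - apply in_grp_mmul; auto using Gamma_I.
  - rewrite Z.opp_involutive, Em; apply grev_act_e0; lra.
  - exists j; split; auto.
    replace (- (- m + 1))%Z with (m - 1)%Z in Ej by lia.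
    rewrite <- (grev_grev (ell (m - 1)%Z)), Ej, grev_act_e0
      by (rewrite !mdet_mmul, Dg, (mpow_mdet_R Rs HG), Iinv_mdet; lra).
    apply act_geod_peq. rewrite !mmul_assoc. do 2 apply peq_mmul_l.
    rewrite Iinv_sq, mmul_mneg_r, mmul_mid_r; apply peq_mneg.
Qed.

Lemma leaf_at_crossing M l l' t0 : 0 < mdet M -> is_leaf Rs l -> is_leaf Rs l' ->
  crosses_RL M l' t0 -> on_geod l (cpt M t0) -> same_unor l l'.
Proof.
  intros HM Hl Hl' [C0 _] Hon.
  destruct (leaf_orbit Rs HG l Hl) as [h [Hh Hsu]], (leaf_orbit Rs HG l' Hl') as [h' [Hh' Hsu']].
  eapply same_unor_trans; [exact Hsu|].
  eapply same_unor_trans; [|apply same_unor_sym; exact Hsu'].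
  apply (leaves_meet Rs HG h h' (cpt M t0)); eauto using cpt_py, same_unor_on.
Qed.

Lemma gaps_leaf_free_of M ell t : 0 < mdet M ->
  (forall m, crosses_RL M (ell m) (t m)) -> (forall m, is_leaf Rs (ell m)) ->
  (forall m, t m < t (m + 1)%Z) ->
  (forall l, is_leaf Rs l -> crossed M l -> exists m, same_unor l (ell m)) ->
  gaps_leaf_free Rs M t.
Proof.
  intros HM Hcr Hlf Hmono Hcomp m s Hs l Hl Hon.
  assert (Hright : forall m', ~ on_geod (ell m') (cpt M (t m' - 1))).
  { intros m' Hon'. destruct (Hcr m') as [_ [C1 _]]. specialize (C1 (t m' - 1) ltac:(lra)).
    unfold right_of, on_geod in *; lra. }
  assert (Hnot : exists s', ~ on_geod l (cpt M s')).
  { apply not_all_ex_not; intros Hall. apply (Hright m).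
    apply (same_unor_on l); [apply (leaf_at_crossing M l (ell m) (t m))|]; auto. }
  destruct (Hcomp l Hl (conj (ex_intro _ s Hon) Hnot)) as [m' Hm'].
  assert (Hon' : on_geod (ell m') (cpt M s)) by (eapply same_unor_on; eauto).
  destruct (Req_dec s (t m')) as [->|Hne].
  - destruct (Z_le_gt_dec m' m) as [Hle|Hgt].
    + assert (X := incr_Z_le t Hmono m' m Hle); lra.
    + assert (X := incr_Z_le t Hmono (m + 1)%Z m' ltac:(lia)); lra.
  - apply (Hright m'), (sidef_cpt_two_zeros M (ell m') s (t m')); auto. apply Hcr.
Qed.

End Crossings.

Lemma mpow_1 g : mpow g 1 = g.
Proof. apply mmul_mid_r. Qed.

Lemma mpow_2 g : mpow g 2 = mmul g g.
Proof. simpl mpow; rewrite mmul_mid_r; reflexivity. Qed.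

Lemma GammaO_R Rs : in_grp (GammaO_gens Rs) Rs.
Proof. apply in_grp_gen; simpl; tauto. Qed.

Lemma GammaO_mpow Rs j : in_grp (GammaO_gens Rs) (mpow Rs j).
Proof. induction j; simpl; [apply in_grp_mid|apply in_grp_mmul; auto using GammaO_R]. Qed.

Lemma GammaO_conj_I Rs j : (j = 1 \/ j = 2)%nat ->
  in_grp (GammaO_gens Rs) (mmul (mmul Iinv (mpow Rs j)) Iinv).
Proof.
  assert (HIRI : in_grp (GammaO_gens Rs) (mmul (mmul Iinv Rs) Iinv))
    by (apply in_grp_gen; simpl; tauto).
  intros [-> | ->]; rewrite ?mpow_1, ?mpow_2; auto.
  apply in_grp_peq with (mmul (mmul (mmul Iinv Rs) Iinv) (mmul (mmul Iinv Rs) Iinv)).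
  - apply in_grp_mmul; auto.
  - right; destruct Rs; unfold mmul, Iinv, mneg; simpl; apply mob_eq; ring.
Qed.

Section Main.
Variable Rs : mob.
Hypothesis HG : good_rotation Rs.
Variables (M : mob) (ell : Z -> geod) (t : Z -> R).
Hypotheses (HM : 0 < mdet M) (Hcr : forall m, crosses_RL M (ell m) (t m))
  (Hlf : forall m, is_leaf Rs (ell m)) (Hmono : forall m, t m < t (m + 1)%Z)
  (Hgap : gaps_leaf_free Rs M t).

Notation GammaO := (in_grp (GammaO_gens Rs)).

Lemma two_steps_fwd m g : GammaO g -> ell m = act_geod g e0 ->
  exists w, In w (Wset Rs) /\ ell (m + 2)%Z = act_geod (mmul g w) e0.
Proof.
  intros Hg Em. assert (Hg' := GammaO_Gamma Rs g Hg).
  destruct (next_leaf Rs HG M ell t HM Hcr Hlf Hmono Hgap m g Hg' Em) as [j [Hj Ej]].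
  destruct (next_leaf Rs HG M ell t HM Hcr Hlf Hmono Hgap (m + 1)%Z
    (mmul g (mmul (mpow Rs j) Iinv))) as [j' [Hj' Ej']]; auto.
  { repeat apply in_grp_mmul; auto using Gamma_I, Gamma_mpow. }
  exists (mmul (mmul (mmul (mpow Rs j) Iinv) (mpow Rs j')) Iinv). split.
  - unfold Wset; cbv zeta.
    destruct Hj as [-> | ->], Hj' as [-> | ->]; rewrite ?mpow_1, ?mpow_2; cbn [In]; tauto.
  - replace (m + 2)%Z with (m + 1 + 1)%Z by lia. rewrite Ej', !mmul_assoc; reflexivity.
Qed.

Lemma two_steps_bwd m g : GammaO g -> ell m = act_geod g e0 ->
  exists h, GammaO h /\ ell (m - 2)%Z = act_geod (mmul g h) e0.
Proof.
  intros Hg Em. assert (Hg' := GammaO_Gamma Rs g Hg).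
  destruct (prev_leaf Rs HG M ell t HM Hcr Hlf Hmono Hgap m g Hg' Em) as [j [Hj Ej]].
  destruct (prev_leaf Rs HG M ell t HM Hcr Hlf Hmono Hgap (m - 1)%Z
    (mmul g (mmul Iinv (mpow Rs j)))) as [j' [Hj' Ej']]; auto.
  { repeat apply in_grp_mmul; auto using Gamma_I, Gamma_mpow. }
  exists (mmul (mmul (mmul Iinv (mpow Rs j)) Iinv) (mpow Rs j')). split.
  - apply in_grp_mmul; auto using GammaO_conj_I, GammaO_mpow.
  - replace (m - 2)%Z with (m - 1 - 1)%Z by lia. rewrite Ej', !mmul_assoc; reflexivity.
Qed.

Lemma Wset_GammaO w : In w (Wset Rs) -> GammaO w.
Proof.
  assert (H : forall j j', (j = 1 \/ j = 2)%nat -> (j' = 1 \/ j' = 2)%nat ->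
    GammaO (mmul (mmul (mmul (mpow Rs j) Iinv) (mpow Rs j')) Iinv)).
  { intros j j' Hj Hj'. rewrite !mmul_assoc, <- (mmul_assoc Iinv).
    apply in_grp_mmul; auto using GammaO_mpow, GammaO_conj_I. }
  unfold Wset; cbv zeta. intros [<-|[<-|[<-|[<-|[]]]]].
  - specialize (H 1%nat 1%nat); rewrite mpow_1 in H; auto.
  - specialize (H 1%nat 2%nat); rewrite mpow_1, mpow_2 in H; auto.
  - specialize (H 2%nat 2%nat); rewrite mpow_2 in H; auto.
  - specialize (H 2%nat 1%nat); rewrite mpow_1, mpow_2 in H; auto.
Qed.

End Main.

Theorem lemma9p1
  (Rs : mob) (p : pt) (c : geod) (M : mob) (ell : Z -> geod) (t : Z -> R) (g0 : mob) :
  (* R_* : order-3 rotation about p, permuting the sides clockwise (angle -2pi/3) *)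
  is_rotation Rs p (- (2 * PI / 3)) ->
  (* the orthogonal projection of p onto e_0 is i (the fixed point of I) *)
  (forall q, 0 < py q -> on_geod e0 q -> hcosh p pI <= hcosh p q) ->
  (* hDelta is hyperideal: its sides have pairwise disjoint closures *)
  (forall s s', In s (sides Rs) -> In s' (sides Rs) -> s <> s' -> closures_disjoint s s') ->
  (* hDelta contains Delta_0 *)
  (forall z, hDelta0 z -> hDelta Rs p z) ->
  (* c has tail and head in the limit set of Gamma_o *)
  in_limit_set (GammaO_gens Rs) (gtail c) ->
  in_limit_set (GammaO_gens Rs) (ghead c) ->
  (* M parametrizes c *)
  param_of c M ->
  (* (ell m) enumerates the leaves crossed by c, in order of crossing, each oriented
     so that c crosses it from right to left *)
  (forall m, (t m < t (m + 1)%Z)) ->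
  (forall m, is_leaf Rs (ell m)) ->
  (forall m m', same_unor (ell m) (ell m') -> m = m') ->
  (forall m, crosses_RL M (ell m) (t m)) ->
  (forall l, is_leaf Rs l -> crossed M l -> exists m, same_unor l (ell m)) ->
  (* normalization: ell_0 = gamma_0 e_0 with gamma_0 in Gamma_o *)
  in_grp (GammaO_gens Rs) g0 -> ell 0%Z = act_geod g0 e0 ->
  forall n : Z,
    (exists gn, in_grp (GammaO_gens Rs) gn /\ ell (2 * n)%Z = act_geod gn e0) /\
    (forall gn gn1, in_grp (GammaO_gens Rs) gn -> in_grp (GammaO_gens Rs) gn1 ->
       ell (2 * n)%Z = act_geod gn e0 -> ell (2 * (n + 1))%Z = act_geod gn1 e0 ->
       exists w, In w (Wset Rs) /\ peq gn1 (mmul gn w)).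
Proof.
  intros Hrot Hproj Hdisj Hcont _ _ [HM _] Hmono Hleaf _ Hcr Hcomp Hg0 Hell0.
  assert (HG := good_rotation_of Rs p Hrot Hproj Hdisj Hcont).
  assert (Hgap := gaps_leaf_free_of Rs HG M ell t HM Hcr Hleaf Hmono Hcomp).
  assert (Horbit : forall n, exists gn,
    in_grp (GammaO_gens Rs) gn /\ ell (2 * n)%Z = act_geod gn e0).
  { induction n as [|n [gn [Hgn En]]|n [gn [Hgn En]]] using Z.peano_ind; [eauto| |].
    - destruct (two_steps_fwd Rs HG M ell t HM Hcr Hleaf Hmono Hgap _ gn Hgn En)
        as [w [Hw Ew]].
      exists (mmul gn w); split; [apply in_grp_mmul; auto using Wset_GammaO|].
      rewrite <- Ew; f_equal; lia.
    - destruct (two_steps_bwd Rs HG M ell t HM Hcr Hleaf Hmono Hgap _ gn Hgn En)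
        as [h [Hh Eh]].
      exists (mmul gn h); split; [apply in_grp_mmul; auto|].
      rewrite <- Eh; f_equal; lia. }
  intros n; split; auto.
  intros gn gn1 Hgn Hgn1 E1 E2.
  destruct (two_steps_fwd Rs HG M ell t HM Hcr Hleaf Hmono Hgap _ gn Hgn E1) as [w [Hw Ew]].
  exists w; split; auto.
  apply (orbit_e0_inj Rs HG); auto using GammaO_Gamma, in_grp_mmul, Wset_GammaO.
  rewrite <- E2, <- Ew; f_equal; lia.
Qed.
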